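(* Let $\mathcal H$ be a separable complex Hilbert space with canonical orthonormal basis $\{e_n\}$ and $S_2$ the Hilbert–Schmidt operators with $\langle\eta,\tau\rangle_2=\operatorname{tr}(\eta^*\tau)$. For a positive definite operator $A\in\mathcal B(S_2)$ there exist selfadjoint operators $b_{11}$ and $a_{nm}$ ($n,m\in\mathbb N$) in $\mathcal B(\mathcal H)$ such that $b_{11},a_{11},a_{22}$ are positive definite and $$A\eta=b_{11}\eta a_{11}+\sum_{\substack{n,m\\(n,m)\ne(1,1)}}\hat\varepsilon_{nm}\eta\,a_{nm},\qquad \eta\in S_2.$$
   Context: $\varepsilon_{nm}=|e_n\rangle\langle e_m|$ (so $\varepsilon_{nm}f=\langle e_m,f\rangle e_n$) and $\hat\varepsilon_{nm}=\frac{1+i}{2}\varepsilon_{nm}+\frac{1-i}{2}\varepsilon_{mn}$. A bounded operator $T$ on a Hilbert space is positive definite if $\inf\{\langle x,Tx\rangle:\|x\|=1\}>0$. *)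

From Stdlib Require Import Reals Arith.
From Coquelicot Require Import Coquelicot.
Open Scope R_scope.

(* Concrete model of the separable (infinite-dim.) complex Hilbert space H:
   H = l^2(nat; C); canonical orthonormal basis e n.  Indices are 0-based:
   the paper's e_1, e_2 are our e 0, e 1. *)
Definition vec := nat -> C.

Definition vadd (x y : vec) : vec := fun k => Cplus (x k) (y k).
Definition vsub (x y : vec) : vec := fun k => Cminus (x k) (y k).
Definition vscal (a : C) (x : vec) : vec := fun k => Cmult a (x k).
Definition vzero : vec := fun _ => RtoC 0.

Definition l2 (x : vec) : Prop := ex_series (fun n => (Cmod (x n)) ^ 2).

(* sum of a complex series (meaningful when it converges) *)
Definition CSeries (a : nat -> C) : C :=
  (Series (fun n => Re (a n)), Series (fun n => Im (a n))).

Definition inner (x y : vec) : C := CSeries (fun n => Cmult (Cconj (x n)) (y n)).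
Definition norm2 (x : vec) : R := sqrt (Series (fun n => (Cmod (x n)) ^ 2)).

Definition e (n : nat) : vec := fun k => if Nat.eqb k n then RtoC 1 else RtoC 0.

(* operators on H (only their action on l^2 matters) *)
Definition op := vec -> vec.

Definition bounded_op (T : op) : Prop :=
  (forall x, l2 x -> l2 (T x)) /\
  (forall x y, l2 x -> l2 y -> T (vadd x y) = vadd (T x) (T y)) /\
  (forall a x, l2 x -> T (vscal a x) = vscal a (T x)) /\
  (exists M : R, forall x, l2 x -> norm2 (T x) <= M * norm2 x).

Definition selfadjoint (T : op) : Prop :=
  bounded_op T /\ forall x y, l2 x -> l2 y -> inner (T x) y = inner x (T y).

Definition posdef (T : op) : Prop :=
  bounded_op T /\
  exists c : R, 0 < c /\
    forall x, l2 x -> norm2 x = 1 ->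
      Im (inner x (T x)) = 0 /\ c <= Re (inner x (T x)).

Definition ocomp (S T : op) : op := fun x => S (T x).
Definition oadd (S T : op) : op := fun x => vadd (S x) (T x).
Definition osub (S T : op) : op := fun x => vsub (S x) (T x).
Definition oscal (a : C) (S : op) : op := fun x => vscal a (S x).
Definition ozero : op := fun _ => vzero.

Definition HS (eta : op) : Prop :=
  bounded_op eta /\ ex_series (fun k => (norm2 (eta (e k))) ^ 2).

(* <eta,tau>_2 = tr(eta^* tau) = sum_k <eta e_k, tau e_k> *)
Definition inner2 (eta tau : op) : C := CSeries (fun k => inner (eta (e k)) (tau (e k))).
Definition norm_HS (eta : op) : R := sqrt (Series (fun k => (norm2 (eta (e k))) ^ 2)).

Definition opS := op -> op.

Definition bounded_opS (A : opS) : Prop :=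
  (forall eta, HS eta -> HS (A eta)) /\
  (forall eta tau, HS eta -> HS tau -> forall x, l2 x ->
      A (oadd eta tau) x = oadd (A eta) (A tau) x) /\
  (forall a eta, HS eta -> forall x, l2 x -> A (oscal a eta) x = oscal a (A eta) x) /\
  (exists M : R, forall eta, HS eta -> norm_HS (A eta) <= M * norm_HS eta).

Definition posdefS (A : opS) : Prop :=
  bounded_opS A /\
  exists c : R, 0 < c /\
    forall eta, HS eta -> norm_HS eta = 1 ->
      Im (inner2 eta (A eta)) = 0 /\ c <= Re (inner2 eta (A eta)).

Definition eps (n m : nat) : op := fun f k => if Nat.eqb k n then f m else RtoC 0.

Definition heps (n m : nat) : op :=
  oadd (oscal (Cdiv (Cplus (RtoC 1) Ci) (RtoC 2)) (eps n m))
       (oscal (Cdiv (Cminus (RtoC 1) Ci) (RtoC 2)) (eps m n)).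

Fixpoint osum (N : nat) (F : nat -> op) : op :=
  match N with
  | O => ozero
  | S N' => oadd (osum N' F) (F N')
  end.

Definition partial_sum (a : nat -> nat -> op) (eta : op) (N : nat) : op :=
  osum N (fun n => osum N (fun m =>
    if (Nat.eqb n 0 && Nat.eqb m 0)%bool then ozero
    else ocomp (heps n m) (ocomp eta (a n m)))).

(* Let [T n m] be the operator with [(T n m f)_j = (A (eps m j) f)_n].  Row [n] of
   [A (eps m m o eta)] is row [m] of [eta o T n m], the [T n m] are bounded, and positivity of [A]
   on the rank-one operators [|e_m><x| + lam |e_n><y|] gives [T n m^* = T m n] and a uniform
   coercivity bound for the [T m m].  As [heps n m o eta o a] only touches rows [n] and [m], the
   choices [a 0 0 = T 0 0], [a n n = T n n - d T 0 0], [a n m = (1-i)/2 T n m + (1+i)/2 T m n]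
   and [b11 = d + (1-d) eps 0 0] make rows [k < N] of [b11 eta a 0 0 + partial_sum a eta N]
   equal to those of [sum_(m<N) A (eps m m o eta) = A eta - A (eta with rows < N deleted)].
   The error is then controlled by the rows [>= N] of [eta], [A eta] and [eta o T 0 0], whose
   Hilbert-Schmidt norms tend to 0; a small [d] keeps [a 1 1] positive definite. *)

From Stdlib Require Import Reals Lia Lra FunctionalExtensionality Bool.
From Coquelicot Require Import Coquelicot.
Open Scope R_scope.

(** * Finite sums and series of reals *)

Fixpoint rsum (N : nat) (a : nat -> R) : R :=
  match N with O => 0 | S N' => rsum N' a + a N' end.

Lemma sum_n_rsum a N : sum_n a N = rsum (S N) a.
Proof.
  induction N.
  - rewrite sum_O. simpl. rewrite Rplus_0_l. reflexivity.
  - rewrite sum_Sn, IHN. reflexivity.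
Qed.

Lemma rsum_ext N a b : (forall k, (k < N)%nat -> a k = b k) -> rsum N a = rsum N b.
Proof. induction N; intros H; simpl; auto. rewrite IHN, H; auto. Qed.

Lemma rsum_le N a b : (forall k, a k <= b k) -> rsum N a <= rsum N b.
Proof. induction N; intros H; simpl. lra. specialize (IHN H). specialize (H N). lra. Qed.

Lemma rsum_nonneg N a : (forall k, 0 <= a k) -> 0 <= rsum N a.
Proof. induction N; intros H; simpl. lra. specialize (IHN H). specialize (H N). lra. Qed.

Lemma rsum_le_mono a N M : (forall k, 0 <= a k) -> (N <= M)%nat -> rsum N a <= rsum M a.
Proof. intros H HNM. induction HNM; simpl. lra. specialize (H m). lra. Qed.

Lemma rsum_stationary a N M :
  (forall k, (N <= k)%nat -> a k = 0) -> (N <= M)%nat -> rsum M a = rsum N a.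
Proof. intros H HNM. induction HNM; simpl; auto. rewrite IHHNM, H; [ring | lia]. Qed.

Lemma ex_series_Rplus a b : ex_series a -> ex_series b -> ex_series (fun k => a k + b k).
Proof. apply (ex_series_plus a b). Qed.

Lemma ex_series_Rscal c a : ex_series a -> ex_series (fun k => c * a k).
Proof. apply (ex_series_scal c a). Qed.

Lemma ex_series_Rext (a b : nat -> R) : (forall n, a n = b n) -> ex_series a -> ex_series b.
Proof. apply ex_series_ext. Qed.

Lemma ex_series_nonneg_le a b : (forall k, 0 <= a k <= b k) -> ex_series b -> ex_series a.
Proof.
  intros H. apply (ex_series_le a b). intros n. specialize (H n).
  change (norm (a n)) with (Rabs (a n)). rewrite Rabs_pos_eq; lra.
Qed.

Lemma is_lim_rsum a : ex_series a -> is_lim_seq (fun N => rsum N a) (Series a).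
Proof.
  intros H. apply Series_correct in H. apply is_lim_seq_incr_1.
  apply is_lim_seq_ext with (sum_n a); [intros; apply sum_n_rsum | exact H].
Qed.

Lemma ex_series_rsum_bounded a B : (forall k, 0 <= a k) -> (forall N, rsum N a <= B) ->
  ex_series a /\ Series a <= B.
Proof.
  intros H0 HB.
  assert (Hf : ex_finite_lim_seq (sum_n a)).
  { apply ex_finite_lim_seq_incr with B; intros n; rewrite !sum_n_rsum; auto.
    simpl. specialize (H0 (S n)). lra. }
  assert (Hex : ex_series a) by (exists (real (Lim_seq (sum_n a))); exact (Lim_seq_correct' _ Hf)).
  split; auto.
  apply (is_lim_seq_le (fun N => rsum N a) (fun _ => B) _ _ HB (is_lim_rsum a Hex)
           (is_lim_seq_const B)).
Qed.

Lemma rsum_le_Series a N : (forall k, 0 <= a k) -> ex_series a -> rsum N a <= Series a.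
Proof.
  intros H0 H. pose proof (is_lim_rsum a H) as HL.
  apply is_lim_seq_incr_n with (N := N) in HL.
  apply (is_lim_seq_le (fun _ => rsum N a) (fun n => rsum (n + N) a) _ _
           (fun n => rsum_le_mono a N (n + N) H0 ltac:(lia)) (is_lim_seq_const _) HL).
Qed.

Lemma Series_nonneg a : (forall k, 0 <= a k) -> ex_series a -> 0 <= Series a.
Proof. intros H0 H. apply (rsum_le_Series a 0) in H; auto. Qed.

Lemma term_le_Series a k : (forall k, 0 <= a k) -> ex_series a -> a k <= Series a.
Proof.
  intros H0 H. apply Rle_trans with (rsum (S k) a).
  - simpl. pose proof (rsum_nonneg k a H0). lra.
  - apply rsum_le_Series; auto.
Qed.

Lemma Series_finite_support a N :
  (forall k, (N <= k)%nat -> a k = 0) -> ex_series a /\ Series a = rsum N a.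
Proof.
  intros H.
  assert (HL : is_series a (rsum N a)).
  { change (is_lim_seq (sum_n a) (rsum N a)).
    apply is_lim_seq_ext_loc with (fun _ => rsum N a); [|apply is_lim_seq_const].
    exists N. intros n Hn. rewrite sum_n_rsum. symmetry. apply rsum_stationary; auto. }
  split; [exists (rsum N a); auto | apply is_series_unique; auto].
Qed.

Lemma Series_bump m v :
  ex_series (fun k => if (k =? m)%nat then v else 0) /\
  Series (fun k => if (k =? m)%nat then v else 0) = v.
Proof.
  destruct (Series_finite_support (fun k => if (k =? m)%nat then v else 0) (S m)) as [H1 H2].
  { intros k Hk. destruct (Nat.eqb_spec k m); [lia | auto]. }
  split; auto. rewrite H2. cbn [rsum]. rewrite Nat.eqb_refl.
  rewrite (rsum_ext m _ (fun _ => 0)).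
  - clear. induction m; cbn [rsum]; lra.
  - intros k Hk. destruct (Nat.eqb_spec k m); [lia | auto].
Qed.

Definition head (a : nat -> R) (N : nat) : nat -> R := fun k => if (k <? N)%nat then a k else 0.
Definition tail (a : nat -> R) (N : nat) : nat -> R := fun k => if (k <? N)%nat then 0 else a k.

Lemma Series_head a N : ex_series (head a N) /\ Series (head a N) = rsum N a.
Proof.
  destruct (Series_finite_support (head a N) N) as [H1 H2].
  { intros k Hk. unfold head. destruct (Nat.ltb_spec k N); [lia | auto]. }
  split; auto. rewrite H2. apply rsum_ext. intros k Hk. unfold head.
  destruct (Nat.ltb_spec k N); [auto | lia].
Qed.

Lemma ex_series_tail a N : ex_series a -> ex_series (tail a N).
Proof.
  intros H. destruct (Series_head a N) as [H1 _].
  apply ex_series_Rext with (fun k => a k + (-1) * head a N k).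
  - intros k. unfold tail, head. destruct (k <? N)%nat; ring.
  - apply ex_series_Rplus; auto. apply ex_series_Rscal; auto.
Qed.

Lemma tail_bounds a N : (forall k, 0 <= a k) -> forall k, 0 <= tail a N k <= a k.
Proof. intros H k. unfold tail. destruct (k <? N)%nat; specialize (H k); lra. Qed.

Lemma Series_tail_nonneg a N : (forall k, 0 <= a k) -> ex_series a -> 0 <= Series (tail a N).
Proof.
  intros. apply Series_nonneg; [intros k; apply tail_bounds | apply ex_series_tail]; auto.
Qed.

Lemma Series_head_tail a N : ex_series a -> Series a = rsum N a + Series (tail a N).
Proof.
  intros H. destruct (Series_head a N) as [H1 H2].
  rewrite (Series_ext a (fun k => head a N k + tail a N k)).
  - rewrite Series_plus, H2; auto using ex_series_tail.
  - intros k. unfold tail, head. destruct (k <? N)%nat; lra.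
Qed.

Lemma Series_tail_lim a : ex_series a -> is_lim_seq (fun N => Series (tail a N)) 0.
Proof.
  intros H.
  apply is_lim_seq_ext with (fun N => Series a - rsum N a).
  - intros N. rewrite (Series_head_tail a N H). ring.
  - replace 0 with (Series a - Series a) by ring.
    apply is_lim_seq_minus'; [apply is_lim_seq_const | apply is_lim_rsum; auto].
Qed.

Lemma quadratic_nonneg_discriminant a b c : 0 <= a ->
  (forall t, 0 <= a * t * t + 2 * b * t + c) -> b * b <= a * c.
Proof.
  intros Ha H.
  destruct (Req_dec b 0) as [Hb | Hb]; [subst; specialize (H 0); nra|].
  destruct (Req_dec a 0) as [Ha0 | Ha0].
  - exfalso. specialize (H (- (c + 1) / (2 * b))). subst.
    replace (0 * (- (c + 1) / (2 * b)) * (- (c + 1) / (2 * b)) + 2 * b * (- (c + 1) / (2 * b)) + c)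
      with (-1) in H by (field; auto).
    lra.
  - specialize (H (- b / a)).
    replace (a * (- b / a) * (- b / a) + 2 * b * (- b / a) + c) with (c - b * b / a) in H
      by (field; auto).
    apply Rmult_le_compat_r with (r := a) in H; [|lra].
    replace ((c - b * b / a) * a) with (a * c - b * b) in H by (field; auto). lra.
Qed.

Lemma rsum_cauchy_schwarz N (a b : nat -> R) :
  rsum N (fun k => a k * b k) * rsum N (fun k => a k * b k) <=
  rsum N (fun k => a k ^ 2) * rsum N (fun k => b k ^ 2).
Proof.
  apply quadratic_nonneg_discriminant; [apply rsum_nonneg; intros; apply pow2_ge_0|].
  intros t.
  replace (rsum N (fun k => a k ^ 2) * t * t + 2 * rsum N (fun k => a k * b k) * t
           + rsum N (fun k => b k ^ 2)) with (rsum N (fun k => (a k * t + b k) ^ 2)).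
  - apply rsum_nonneg. intros; apply pow2_ge_0.
  - induction N; cbn [rsum]; [ring | rewrite IHN; ring].
Qed.

Lemma rsum_cauchy_schwarz_Series N (a b : nat -> R) :
  (forall k, 0 <= a k) -> (forall k, 0 <= b k) ->
  ex_series (fun k => a k ^ 2) -> ex_series (fun k => b k ^ 2) ->
  rsum N (fun k => a k * b k) <= sqrt (Series (fun k => a k ^ 2)) * sqrt (Series (fun k => b k ^ 2)).
Proof.
  intros Ha Hb Ea Eb.
  assert (Hsq : forall c : nat -> R, 0 <= rsum N (fun k => c k ^ 2))
    by (intros; apply rsum_nonneg; intros; apply pow2_ge_0).
  apply Rle_trans with (sqrt (rsum N (fun k => a k ^ 2)) * sqrt (rsum N (fun k => b k ^ 2))).
  - rewrite <- sqrt_mult by auto.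
    rewrite <- (sqrt_square (rsum N (fun k => a k * b k)))
      by (apply rsum_nonneg; intros; apply Rmult_le_pos; auto).
    apply sqrt_le_1_alt, rsum_cauchy_schwarz.
  - apply Rmult_le_compat; try apply sqrt_pos; apply sqrt_le_1_alt;
      apply rsum_le_Series; auto; intros; apply pow2_ge_0.
Qed.

Lemma Series_rsum K (c : nat -> nat -> R) : (forall k, ex_series (c k)) ->
  ex_series (fun j => rsum K (fun k => c k j)) /\
  Series (fun j => rsum K (fun k => c k j)) = rsum K (fun k => Series (c k)).
Proof.
  intros H. induction K; simpl.
  - apply (Series_finite_support (fun _ => 0) 0); auto.
  - destruct IHK as [IH1 IH2]. split; [apply ex_series_Rplus; auto|].
    rewrite Series_plus, IH2; auto.
Qed.

Lemma Series_swap_le (b : nat -> nat -> R) : (forall j k, 0 <= b j k) ->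
  (forall j, ex_series (b j)) -> ex_series (fun j => Series (b j)) ->
  (forall k, ex_series (fun j => b j k)) /\ ex_series (fun k => Series (fun j => b j k)) /\
  Series (fun k => Series (fun j => b j k)) <= Series (fun j => Series (b j)).
Proof.
  intros H0 Hr HS.
  assert (Hc : forall k, ex_series (fun j => b j k)).
  { intros k. apply ex_series_nonneg_le with (fun j => Series (b j)); auto.
    intros j. split; auto. apply term_le_Series; auto. }
  assert (HB : forall K, rsum K (fun k => Series (fun j => b j k)) <= Series (fun j => Series (b j))).
  { intros K. destruct (Series_rsum K (fun k j => b j k) Hc) as [_ <-].
    apply Series_le; auto. intros j. split.
    - apply rsum_nonneg; auto.
    - apply rsum_le_Series; auto. }
  destruct (ex_series_rsum_bounded _ _ (fun k => Series_nonneg _ (fun j => H0 j k) (Hc k)) HB).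
  auto.
Qed.

Lemma rsum_lim0 J (u : nat -> nat -> R) : (forall j, is_lim_seq (u j) 0) ->
  is_lim_seq (fun N => rsum J (fun j => u j N)) 0.
Proof.
  intros H. induction J; simpl; [apply is_lim_seq_const|].
  replace 0 with (0 + 0) by ring. apply is_lim_seq_plus'; auto.
Qed.

(* Cut the outer series at a fixed [J]: its tail is small uniformly in [N], and each of the first
   [J] inner series has a vanishing tail. *)
Lemma double_Series_tail_lim (b : nat -> nat -> R) : (forall j k, 0 <= b j k) ->
  (forall j, ex_series (b j)) -> ex_series (fun j => Series (b j)) ->
  (forall N, ex_series (fun j => Series (tail (b j) N))) /\
  is_lim_seq (fun N => Series (fun j => Series (tail (b j) N))) 0.
Proof.
  intros H0 Hr HS.
  set (S := fun j => Series (b j)).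
  assert (HSt : forall j N, 0 <= Series (tail (b j) N) <= S j).
  { intros j N. split; [apply Series_tail_nonneg; auto|].
    apply Series_le; auto. apply tail_bounds; auto. }
  assert (Hex : forall N, ex_series (fun j => Series (tail (b j) N)))
    by (intros N; apply ex_series_nonneg_le with S; auto).
  split; auto.
  apply is_lim_seq_spec. intros eps.
  assert (HT := Series_tail_lim S HS). apply is_lim_seq_spec in HT.
  destruct (HT (pos_div_2 eps)) as [J HJ]. specialize (HJ J (Nat.le_refl _)).
  assert (HF := rsum_lim0 J (fun j N => Series (tail (b j) N))
                  (fun j => Series_tail_lim _ (Hr j))).
  apply is_lim_seq_spec in HF. destruct (HF (pos_div_2 eps)) as [N0 HN0].
  exists N0. intros N HN. specialize (HN0 N HN). simpl in *.
  rewrite Rminus_0_r in *.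
  rewrite (Series_head_tail _ J (Hex N)).
  assert (Hle : forall k, 0 <= tail (fun j => Series (tail (b j) N)) J k <= tail S J k).
  { intros k. unfold tail. destruct (k <? J)%nat; [lra | apply HSt]. }
  assert (Htail : Series (tail (fun j => Series (tail (b j) N)) J) <= Series (tail S J))
    by (apply Series_le; auto; apply ex_series_tail; auto).
  assert (0 <= Series (tail (fun j => Series (tail (b j) N)) J))
    by (apply Series_nonneg; [apply Hle | apply ex_series_tail; auto]).
  assert (0 <= rsum J (fun j => Series (tail (b j) N))) by (apply rsum_nonneg; intros; apply HSt).
  rewrite Rabs_pos_eq in * by lra.
  lra.
Qed.

(** * Finite sums and limits in C *)

Ltac C_field :=
  repeat match goal with z : C |- _ => destruct z end;
  unfold Cplus, Cmult, Cminus, Copp, Cconj, RtoC, Ci, Cdiv, Cinv in *;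
  simpl; apply injective_projections; simpl; field.

Fixpoint csum (N : nat) (g : nat -> C) : C :=
  match N with O => RtoC 0 | S N' => Cplus (csum N' g) (g N') end.

Lemma csum_ext N f g : (forall k, (k < N)%nat -> f k = g k) -> csum N f = csum N g.
Proof. induction N; intros H; simpl; auto. rewrite IHN, H; auto. Qed.

Lemma csum_plus N f g : csum N (fun k => Cplus (f k) (g k)) = Cplus (csum N f) (csum N g).
Proof. induction N; simpl; [C_field | rewrite IHN; ring]. Qed.

Lemma csum_scal N c f : csum N (fun k => Cmult c (f k)) = Cmult c (csum N f).
Proof. induction N; simpl; [C_field | rewrite IHN; ring]. Qed.

Lemma csum_conj N f : csum N (fun k => Cconj (f k)) = Cconj (csum N f).
Proof. induction N; simpl; [C_field | rewrite IHN, Cplus_conj; reflexivity]. Qed.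

Lemma csum_zero N g : (forall n, (n < N)%nat -> g n = RtoC 0) -> csum N g = RtoC 0.
Proof. induction N; intros H; simpl; auto. rewrite IHN, H; auto. C_field. Qed.

Lemma csum_if N (b : bool) g :
  csum N (fun n => if b then g n else RtoC 0) = if b then csum N g else RtoC 0.
Proof. destruct b; [reflexivity | apply csum_zero; auto]. Qed.

Lemma csum_kronecker N k g :
  csum N (fun n => if (n =? k)%nat then g n else RtoC 0) = if (k <? N)%nat then g k else RtoC 0.
Proof.
  induction N; simpl; auto. rewrite IHN.
  destruct (Nat.eqb_spec N k); destruct (Nat.ltb_spec k N); destruct (Nat.ltb_spec k (S N));
    try lia; subst; ring.
Qed.

Lemma csum_kronecker_l N k g :
  csum N (fun n => if (k =? n)%nat then g n else RtoC 0) = if (k <? N)%nat then g k else RtoC 0.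
Proof.
  rewrite <- csum_kronecker. apply csum_ext. intros. rewrite Nat.eqb_sym. reflexivity.
Qed.

Lemma csum_update N k g v : (k < N)%nat ->
  csum N (fun m => if (m =? k)%nat then v else g m) = Cplus (Cminus (csum N g) (g k)) v.
Proof.
  intros Hk.
  rewrite (csum_ext N _ (fun m => Cplus (g m) (if (m =? k)%nat then Cminus v (g m) else RtoC 0))).
  - rewrite csum_plus, csum_kronecker. destruct (Nat.ltb_spec k N); [ring | lia].
  - intros m _. destruct (m =? k)%nat; ring.
Qed.

Lemma re_csum N g : Re (csum N g) = rsum N (fun k => Re (g k)).
Proof. induction N; simpl; auto. rewrite <- IHN. reflexivity. Qed.

Lemma im_csum N g : Im (csum N g) = rsum N (fun k => Im (g k)).
Proof. induction N; simpl; auto. rewrite <- IHN. reflexivity. Qed.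

Lemma Cmod_csum N g : Cmod (csum N g) <= rsum N (fun k => Cmod (g k)).
Proof.
  induction N; simpl; [rewrite Cmod_0; lra|].
  eapply Rle_trans; [apply Cmod_triangle | lra].
Qed.

Lemma im_le_Cmod z : Rabs (Im z) <= Cmod z.
Proof.
  unfold Cmod. rewrite <- sqrt_Rsqr_abs. apply sqrt_le_1_alt. unfold Rsqr, Im.
  destruct z; simpl. nra.
Qed.

Lemma Cmod_le_re_im z : Cmod z <= Rabs (Re z) + Rabs (Im z).
Proof.
  destruct z as [x y]. unfold Cmod, Re, Im. cbn [fst snd].
  pose proof (Rabs_pos x). pose proof (Rabs_pos y).
  rewrite <- (sqrt_Rsqr (Rabs x + Rabs y)) by lra. apply sqrt_le_1_alt. unfold Rsqr.
  rewrite <- (pow2_abs x), <- (pow2_abs y). nra.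
Qed.

Lemma Cmod_minus_sym a b : Cmod (Cminus a b) = Cmod (Cminus b a).
Proof. replace (Cminus a b) with (Copp (Cminus b a)) by ring. apply Cmod_opp. Qed.

Definition is_lim_Cseq (u : nat -> C) (l : C) := is_lim_seq (fun J => Cmod (Cminus (u J) l)) 0.

Lemma is_lim_seq_squeeze0 (u w : nat -> R) N0 :
  (forall n, (N0 <= n)%nat -> 0 <= u n <= w n) -> is_lim_seq w 0 -> is_lim_seq u 0.
Proof.
  intros H Hw. apply is_lim_seq_incr_n with (N := N0).
  apply is_lim_seq_incr_n with (N := N0) in Hw.
  apply is_lim_seq_le_le with (fun _ => 0) (fun n => w (n + N0)%nat); auto.
  - intros; apply H; lia.
  - apply is_lim_seq_const.
Qed.

Lemma is_lim_seq_sqrt0 u : (forall n, 0 <= u n) -> is_lim_seq u 0 -> is_lim_seq (fun n => sqrt (u n)) 0.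
Proof.
  intros H Hu. rewrite <- sqrt_0. apply is_lim_seq_continuous; auto.
  apply continuity_pt_sqrt. lra.
Qed.

Lemma is_lim_Cseq_squeeze u l w :
  (forall J, Cmod (Cminus (u J) l) <= w J) -> is_lim_seq w 0 -> is_lim_Cseq u l.
Proof.
  intros H. apply is_lim_seq_squeeze0 with 0%nat. intros n _. split; auto. apply Cmod_ge_0.
Qed.

Lemma is_lim_Cseq_ext u v l : (forall J, u J = v J) -> is_lim_Cseq u l -> is_lim_Cseq v l.
Proof. intros H. apply is_lim_seq_ext. intros; rewrite H; auto. Qed.

Lemma is_lim_Cseq_stationary u l N : (forall J, (N <= J)%nat -> u J = l) -> is_lim_Cseq u l.
Proof.
  intros H. apply is_lim_seq_ext_loc with (fun _ => 0); [|apply is_lim_seq_const].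
  exists N. intros J HJ. rewrite H by auto. replace (Cminus l l) with (RtoC 0) by ring.
  now rewrite Cmod_0.
Qed.

Lemma is_lim_Cseq_plus u v a b : is_lim_Cseq u a -> is_lim_Cseq v b ->
  is_lim_Cseq (fun J => Cplus (u J) (v J)) (Cplus a b).
Proof.
  intros Hu Hv. apply is_lim_Cseq_squeeze with (fun J => Cmod (Cminus (u J) a) + Cmod (Cminus (v J) b)).
  - intros J.
    replace (Cminus (Cplus (u J) (v J)) (Cplus a b)) with (Cplus (Cminus (u J) a) (Cminus (v J) b))
      by ring.
    apply Cmod_triangle.
  - replace 0 with (0 + 0) by ring. apply is_lim_seq_plus'; auto.
Qed.

Lemma is_lim_Cseq_scal c u a : is_lim_Cseq u a -> is_lim_Cseq (fun J => Cmult c (u J)) (Cmult c a).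
Proof.
  intros Hu. apply is_lim_Cseq_squeeze with (fun J => Cmod c * Cmod (Cminus (u J) a)).
  - intros J. replace (Cminus (Cmult c (u J)) (Cmult c a)) with (Cmult c (Cminus (u J) a)) by ring.
    rewrite Cmod_mult. lra.
  - replace 0 with (Cmod c * 0) by ring. apply (is_lim_seq_scal_l _ (Cmod c) 0). auto.
Qed.

Lemma is_lim_Cseq_conj u a : is_lim_Cseq u a -> is_lim_Cseq (fun J => Cconj (u J)) (Cconj a).
Proof.
  intros Hu. apply is_lim_Cseq_squeeze with (fun J => Cmod (Cminus (u J) a)); auto.
  intros J. rewrite <- Cminus_conj, Cmod_conj. lra.
Qed.

Lemma is_lim_Cseq_unique u l1 l2 : is_lim_Cseq u l1 -> is_lim_Cseq u l2 -> l1 = l2.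
Proof.
  intros H1 H2.
  assert (Hb : forall J, Cmod (Cminus l2 l1) <= Cmod (Cminus (u J) l1) + Cmod (Cminus (u J) l2)).
  { intros J. replace (Cminus l2 l1) with (Cplus (Cminus (u J) l1) (Copp (Cminus (u J) l2))) by ring.
    rewrite <- (Cmod_opp (Cminus (u J) l2)). apply Cmod_triangle. }
  assert (Hle := is_lim_seq_le (fun _ => Cmod (Cminus l2 l1)) _ _ (0 + 0) Hb (is_lim_seq_const _)
                   (is_lim_seq_plus' _ _ _ _ H1 H2)).
  simpl in Hle.
  assert (Hz : Cmod (Cminus l2 l1) = 0) by (pose proof (Cmod_ge_0 (Cminus l2 l1)); lra).
  apply Cmod_eq_0 in Hz. replace l2 with (Cplus (Cminus l2 l1) l1) by ring. rewrite Hz. ring.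
Qed.

Lemma is_lim_Cseq_Cmod_le u l B : (forall J, Cmod (u J) <= B) -> is_lim_Cseq u l -> Cmod l <= B.
Proof.
  intros H Hu.
  assert (Hb : forall J, Cmod l <= B + Cmod (Cminus (u J) l)).
  { intros J. replace l with (Cplus (u J) (Copp (Cminus (u J) l))) at 1 by ring.
    eapply Rle_trans; [apply Cmod_triangle|]. rewrite Cmod_opp. specialize (H J). lra. }
  assert (HL : is_lim_seq (fun J => B + Cmod (Cminus (u J) l)) (B + 0))
    by (apply is_lim_seq_plus'; [apply is_lim_seq_const | auto]).
  pose proof (is_lim_seq_le _ _ _ _ Hb (is_lim_seq_const _) HL). simpl in *. lra.
Qed.

Lemma is_series_of_rsum (a : nat -> R) l :
  is_lim_seq (fun J => Rabs (rsum J a - l)) 0 -> is_series a l.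
Proof.
  intros H. change (is_lim_seq (sum_n a) l).
  apply is_lim_seq_ext with (fun N => rsum (S N) a); [intros; rewrite sum_n_rsum; auto|].
  apply (is_lim_seq_incr_1 (fun N => rsum N a)).
  replace (Finite l) with (Finite (0 + l)) by (f_equal; ring).
  apply is_lim_seq_ext with (fun N => (rsum N a - l) + l); [intros; ring|].
  apply is_lim_seq_plus'; [apply is_lim_seq_abs_0; auto | apply is_lim_seq_const].
Qed.

Lemma CSeries_of_lim s l : is_lim_Cseq (fun J => csum J s) l -> CSeries s = l.
Proof.
  intros H. unfold CSeries.
  rewrite (is_series_unique (fun n => Re (s n)) (Re l)), (is_series_unique (fun n => Im (s n)) (Im l)).
  - destruct l; reflexivity.
  - apply is_series_of_rsum, is_lim_seq_squeeze0 with (2 := H) (N0 := 0%nat).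
    intros J _. rewrite <- im_csum. split; [apply Rabs_pos|].
    eapply Rle_trans; [|apply im_le_Cmod]. right. f_equal.
  - apply is_series_of_rsum, is_lim_seq_squeeze0 with (2 := H) (N0 := 0%nat).
    intros J _. rewrite <- re_csum. split; [apply Rabs_pos|].
    eapply Rle_trans; [|apply re_le_Cmod]. right. f_equal.
Qed.

Lemma is_lim_Cseq_CSeries s :
  ex_series (fun n => Cmod (s n)) -> is_lim_Cseq (fun J => csum J s) (CSeries s).
Proof.
  intros H.
  assert (Hpart : forall f : C -> R, (forall z, Rabs (f z) <= Cmod z) ->
            is_lim_seq (fun J => Rabs (rsum J (fun n => f (s n)) - Series (fun n => f (s n)))) 0).
  { intros f Hf. apply (proj1 (is_lim_seq_abs_0 _)).
    replace 0 with (Series (fun n => f (s n)) - Series (fun n => f (s n))) by ring.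
    apply is_lim_seq_minus'; [|apply is_lim_seq_const].
    apply is_lim_rsum, ex_series_Rabs, ex_series_nonneg_le with (2 := H).
    intros; split; [apply Rabs_pos | apply Hf]. }
  apply is_lim_Cseq_squeeze with (fun J => Rabs (rsum J (fun n => Re (s n)) - Series (fun n => Re (s n)))
     + Rabs (rsum J (fun n => Im (s n)) - Series (fun n => Im (s n)))).
  - intros J. eapply Rle_trans; [apply Cmod_le_re_im|]. unfold CSeries.
    rewrite <- re_csum, <- im_csum. right. reflexivity.
  - replace 0 with (0 + 0) by ring.
    apply is_lim_seq_plus'; apply Hpart; [apply re_le_Cmod | apply im_le_Cmod].
Qed.

(** * The sequence space l2 *)

Definition sqnorm (x : vec) : R := Series (fun n => Cmod (x n) ^ 2).

Lemma sqnorm_nonneg x : l2 x -> 0 <= sqnorm x.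
Proof. intros H. apply Series_nonneg; auto. intros; apply pow2_ge_0. Qed.

Lemma norm2_nonneg x : 0 <= norm2 x.
Proof. apply sqrt_pos. Qed.

Lemma norm2_pow2 x : l2 x -> norm2 x ^ 2 = sqnorm x.
Proof. intros H. unfold norm2. rewrite pow2_sqrt; auto. apply sqnorm_nonneg; auto. Qed.

Lemma Cmod_le_norm2 x k : l2 x -> Cmod (x k) <= norm2 x.
Proof.
  intros H. unfold norm2. rewrite <- (sqrt_pow2 (Cmod (x k))) by apply Cmod_ge_0.
  apply sqrt_le_1_alt. apply (term_le_Series (fun n => Cmod (x n) ^ 2)); auto.
  intros; apply pow2_ge_0.
Qed.

Lemma Cmod_plus_pow2 a b : Cmod (Cplus a b) ^ 2 <= 2 * Cmod a ^ 2 + 2 * Cmod b ^ 2.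
Proof.
  pose proof (Cmod_triangle a b). pose proof (Cmod_ge_0 (Cplus a b)).
  pose proof (Cmod_ge_0 a). pose proof (Cmod_ge_0 b).
  pose proof (Rle_0_sqr (Cmod a - Cmod b)). unfold Rsqr in *. simpl. nra.
Qed.

Lemma l2_vadd x y : l2 x -> l2 y -> l2 (vadd x y).
Proof.
  intros Hx Hy. apply ex_series_nonneg_le with (fun n => 2 * Cmod (x n) ^ 2 + 2 * Cmod (y n) ^ 2).
  - intros n. split; [apply pow2_ge_0 | apply Cmod_plus_pow2].
  - apply ex_series_Rplus; apply ex_series_Rscal; auto.
Qed.

Lemma sqnorm_vadd x y : l2 x -> l2 y -> sqnorm (vadd x y) <= 2 * sqnorm x + 2 * sqnorm y.
Proof.
  intros Hx Hy. unfold sqnorm. rewrite <- !Series_scal_l, <- Series_plus.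
  - apply Series_le; [intros n; split; [apply pow2_ge_0 | apply Cmod_plus_pow2]|].
    apply ex_series_Rplus; apply ex_series_Rscal; auto.
  - apply ex_series_Rscal; auto.
  - apply ex_series_Rscal; auto.
Qed.

Lemma norm2_vadd x y : l2 x -> l2 y -> norm2 (vadd x y) <= 2 * (norm2 x + norm2 y).
Proof.
  intros Hx Hy. pose proof (norm2_nonneg x). pose proof (norm2_nonneg y).
  rewrite <- (sqrt_pow2 (2 * (norm2 x + norm2 y))) by lra.
  apply sqrt_le_1_alt. eapply Rle_trans; [apply sqnorm_vadd; auto|].
  rewrite <- !norm2_pow2 by auto. nra.
Qed.

Lemma l2_vscal a x : l2 x -> l2 (vscal a x).
Proof.
  intros Hx. apply ex_series_Rext with (fun n => Cmod a ^ 2 * Cmod (x n) ^ 2).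
  - intros n. unfold vscal. rewrite Cmod_mult. ring.
  - apply ex_series_Rscal; auto.
Qed.

Lemma norm2_vscal a x : norm2 (vscal a x) = Cmod a * norm2 x.
Proof.
  unfold norm2. rewrite <- (sqrt_pow2 (Cmod a)) by apply Cmod_ge_0.
  rewrite <- sqrt_mult_alt, <- Series_scal_l by apply pow2_ge_0.
  f_equal. apply Series_ext. intros n. unfold vscal. rewrite Cmod_mult. ring.
Qed.

Lemma vsub_vadd x y : vsub x y = vadd x (vscal (RtoC (-1)) y).
Proof. apply functional_extensionality. intros k. unfold vsub, vadd, vscal. C_field. Qed.

Lemma l2_vsub x y : l2 x -> l2 y -> l2 (vsub x y).
Proof. intros. rewrite vsub_vadd. apply l2_vadd; auto. apply l2_vscal; auto. Qed.

Definition vsingle (m : nat) (z : C) : vec := vscal z (e m).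

Lemma vsingle_eval m z k : vsingle m z k = if (k =? m)%nat then z else RtoC 0.
Proof. unfold vsingle, vscal, e. destruct (k =? m)%nat; C_field. Qed.

Lemma e_vsingle m : e m = vsingle m (RtoC 1).
Proof. apply functional_extensionality; intros k. unfold vsingle, vscal. C_field. Qed.

Lemma vzero_vsingle : vzero = vsingle 0 (RtoC 0).
Proof. apply functional_extensionality; intros k. unfold vsingle, vscal, vzero. C_field. Qed.

Lemma vsingle_plus m a b : vsingle m (Cplus a b) = vadd (vsingle m a) (vsingle m b).
Proof.
  apply functional_extensionality; intros k. unfold vadd. rewrite !vsingle_eval.
  destruct (k =? m)%nat; C_field.
Qed.

Lemma vsingle_mult m a b : vsingle m (Cmult a b) = vscal a (vsingle m b).
Proof.
  apply functional_extensionality; intros k. unfold vscal. rewrite !vsingle_eval.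
  destruct (k =? m)%nat; C_field.
Qed.

Lemma Cmod_vsingle_pow2 m z k :
  Cmod (vsingle m z k) ^ 2 = if (k =? m)%nat then Cmod z ^ 2 else 0.
Proof. rewrite vsingle_eval. destruct (k =? m)%nat; auto. rewrite Cmod_0. ring. Qed.

Lemma l2_vsingle m z : l2 (vsingle m z).
Proof.
  eapply ex_series_Rext; [|apply (Series_bump m (Cmod z ^ 2))].
  intros; rewrite Cmod_vsingle_pow2; auto.
Qed.

Lemma norm2_vsingle m z : norm2 (vsingle m z) = Cmod z.
Proof.
  unfold norm2. rewrite (Series_ext _ _ (Cmod_vsingle_pow2 m z)), (proj2 (Series_bump _ _)).
  apply sqrt_pow2, Cmod_ge_0.
Qed.

Lemma l2_e m : l2 (e m).
Proof. rewrite e_vsingle. apply l2_vsingle. Qed.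

Lemma norm2_e m : norm2 (e m) = 1.
Proof. rewrite e_vsingle, norm2_vsingle, Cmod_1. auto. Qed.

Lemma l2_vzero : l2 vzero.
Proof. rewrite vzero_vsingle. apply l2_vsingle. Qed.

Lemma norm2_vzero : norm2 vzero = 0.
Proof. rewrite vzero_vsingle, norm2_vsingle, Cmod_0; auto. Qed.

Lemma norm2_eq_0 x : l2 x -> norm2 x = 0 -> x = vzero.
Proof.
  intros H H0. apply functional_extensionality; intros k. pose proof (Cmod_le_norm2 x k H).
  pose proof (Cmod_ge_0 (x k)). apply Cmod_eq_0. lra.
Qed.

Definition trunc (f : vec) (J : nat) : vec := fun k => if (k <? J)%nat then f k else RtoC 0.

Lemma trunc_S f J : trunc f (S J) = vadd (trunc f J) (vsingle J (f J)).
Proof.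
  apply functional_extensionality; intros k. unfold trunc, vadd. rewrite vsingle_eval.
  destruct (Nat.ltb_spec k (S J)); destruct (Nat.ltb_spec k J); destruct (Nat.eqb_spec k J);
    try lia; subst; C_field.
Qed.

Lemma l2_trunc f J : l2 (trunc f J).
Proof.
  induction J; [apply l2_vzero|]. rewrite trunc_S. apply l2_vadd; auto. apply l2_vsingle.
Qed.

Create HintDb l2.
#[export] Hint Resolve l2_vadd l2_vsub l2_vscal l2_vsingle l2_e l2_vzero l2_trunc : l2.

Lemma norm2_sub_trunc_lim f : l2 f -> is_lim_seq (fun J => norm2 (vsub f (trunc f J))) 0.
Proof.
  intros H. apply is_lim_seq_sqrt0; [intros; apply sqnorm_nonneg; auto with l2|].
  apply is_lim_seq_ext with (fun J => Series (tail (fun n => Cmod (f n) ^ 2) J));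
    [|apply Series_tail_lim; auto].
  intros J. unfold sqnorm. apply Series_ext. intros k. unfold tail, vsub, trunc.
  destruct (k <? J)%nat; [|f_equal; f_equal; C_field].
  replace (Cminus (f k) (f k)) with (RtoC 0) by ring. rewrite Cmod_0. ring.
Qed.

Definition inner_terms (x y : vec) : nat -> C := fun n => Cmult (Cconj (x n)) (y n).

Lemma is_lim_inner x y : l2 x -> l2 y -> is_lim_Cseq (fun J => csum J (inner_terms x y)) (inner x y).
Proof.
  intros Hx Hy. apply is_lim_Cseq_CSeries. unfold inner_terms.
  apply ex_series_nonneg_le with (fun n => / 2 * (Cmod (x n) ^ 2 + Cmod (y n) ^ 2)).
  - intros n. rewrite Cmod_mult, Cmod_conj.
    pose proof (Cmod_ge_0 (x n)). pose proof (Cmod_ge_0 (y n)).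
    pose proof (Rle_0_sqr (Cmod (x n) - Cmod (y n))). unfold Rsqr in *.
    split; [apply Rmult_le_pos; auto | simpl; lra].
  - apply ex_series_Rscal, ex_series_Rplus; auto.
Qed.

Lemma inner_of_lim x y l : l2 x -> l2 y ->
  is_lim_Cseq (fun J => csum J (inner_terms x y)) l -> inner x y = l.
Proof. intros Hx Hy. apply is_lim_Cseq_unique, is_lim_inner; auto. Qed.

Lemma Cmod_inner_le x y : l2 x -> l2 y -> Cmod (inner x y) <= norm2 x * norm2 y.
Proof.
  intros Hx Hy. apply is_lim_Cseq_Cmod_le with (2 := is_lim_inner x y Hx Hy).
  intros J. eapply Rle_trans; [apply Cmod_csum|]. unfold inner_terms.
  eapply Rle_trans.
  - apply rsum_le with (b := fun j => Cmod (x j) * Cmod (y j)).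
    intros; rewrite Cmod_mult, Cmod_conj; lra.
  - apply rsum_cauchy_schwarz_Series; auto; intros; apply Cmod_ge_0.
Qed.

Lemma inner_vadd_r x y z : l2 x -> l2 y -> l2 z -> inner x (vadd y z) = Cplus (inner x y) (inner x z).
Proof.
  intros. apply inner_of_lim; auto with l2.
  eapply is_lim_Cseq_ext; [|apply is_lim_Cseq_plus; apply is_lim_inner; eauto].
  intros J; cbv beta. rewrite <- csum_plus. apply csum_ext. intros. unfold inner_terms, vadd. ring.
Qed.

Lemma inner_vscal_r x a y : l2 x -> l2 y -> inner x (vscal a y) = Cmult a (inner x y).
Proof.
  intros. apply inner_of_lim; auto with l2.
  eapply is_lim_Cseq_ext; [|apply is_lim_Cseq_scal; apply is_lim_inner; eauto].
  intros J; cbv beta. rewrite <- csum_scal. apply csum_ext. intros. unfold inner_terms, vscal. ring.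
Qed.

Lemma inner_conj x y : l2 x -> l2 y -> inner y x = Cconj (inner x y).
Proof.
  intros. apply inner_of_lim; auto.
  eapply is_lim_Cseq_ext; [|apply is_lim_Cseq_conj; apply is_lim_inner; eauto].
  intros J; cbv beta. rewrite <- csum_conj. apply csum_ext. intros. unfold inner_terms.
  rewrite Cmult_conj, Cconj_conj. ring.
Qed.

Lemma inner_vadd_l x y z : l2 x -> l2 y -> l2 z -> inner (vadd x y) z = Cplus (inner x z) (inner y z).
Proof.
  intros. rewrite inner_conj, inner_vadd_r, Cplus_conj, <- !inner_conj; auto with l2.
Qed.

Lemma inner_vscal_l a x y : l2 x -> l2 y -> inner (vscal a x) y = Cmult (Cconj a) (inner x y).
Proof.
  intros. rewrite inner_conj, inner_vscal_r, Cmult_conj, <- !inner_conj; auto with l2.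
Qed.

Lemma inner_vsub_r x y z : l2 x -> l2 y -> l2 z -> inner x (vsub y z) = Cminus (inner x y) (inner x z).
Proof. intros. rewrite vsub_vadd, inner_vadd_r, inner_vscal_r; auto with l2. ring. Qed.

Lemma inner_vsingle_l m z y : inner (vsingle m z) y = Cmult (Cconj z) (y m).
Proof.
  apply CSeries_of_lim, is_lim_Cseq_stationary with (S m). intros J HJ.
  rewrite (csum_ext J _ (fun n => if (n =? m)%nat then Cmult (Cconj z) (y n) else RtoC 0)).
  - rewrite csum_kronecker. destruct (Nat.ltb_spec m J); [auto | lia].
  - intros k _. unfold inner_terms. rewrite vsingle_eval. destruct (k =? m)%nat; [auto | C_field].
Qed.

Lemma inner_vsingle_r x m z : inner x (vsingle m z) = Cmult (Cconj (x m)) z.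
Proof.
  apply CSeries_of_lim, is_lim_Cseq_stationary with (S m). intros J HJ.
  rewrite (csum_ext J _ (fun n => if (n =? m)%nat then Cmult (Cconj (x n)) z else RtoC 0)).
  - rewrite csum_kronecker. destruct (Nat.ltb_spec m J); [auto | lia].
  - intros k _. unfold inner_terms. rewrite vsingle_eval. destruct (k =? m)%nat; [auto | ring].
Qed.

Lemma inner_e_r x m : inner x (e m) = Cconj (x m).
Proof. rewrite e_vsingle, inner_vsingle_r. ring. Qed.

Lemma inner_vzero_l y : inner vzero y = RtoC 0.
Proof. rewrite vzero_vsingle, inner_vsingle_l. C_field. Qed.

Lemma inner_vzero_r x : inner x vzero = RtoC 0.
Proof. rewrite vzero_vsingle, inner_vsingle_r. ring. Qed.

Lemma csum_Cmod_pow2 J (w : vec) :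
  csum J (fun j => Cmult (Cconj (w j)) (w j)) = RtoC (rsum J (fun k => Cmod (w k) ^ 2)).
Proof.
  induction J; simpl; auto. rewrite IHJ, (Cmult_comm (Cconj _)), <- Cmod2_conj.
  unfold RtoC, Cplus. simpl. apply injective_projections; simpl; ring.
Qed.

Lemma inner_self x : l2 x -> inner x x = RtoC (sqnorm x).
Proof.
  intros Hx. apply inner_of_lim; auto.
  apply is_lim_Cseq_squeeze with (fun J => Rabs (rsum J (fun n => Cmod (x n) ^ 2) - sqnorm x)).
  - intros J. right. unfold inner_terms. rewrite csum_Cmod_pow2, <- Cmod_R. f_equal. C_field.
  - apply (proj1 (is_lim_seq_abs_0 _)).
    replace 0 with (sqnorm x - sqnorm x) by ring.
    apply is_lim_seq_minus'; [apply is_lim_rsum; auto | apply is_lim_seq_const].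
Qed.

(** * Bounded and Hilbert-Schmidt operators *)

Section BoundedOperator.
Variable T : op.
Hypothesis HT : bounded_op T.

Lemma bop_l2 x : l2 x -> l2 (T x).
Proof. apply HT. Qed.

Lemma bop_vadd x y : l2 x -> l2 y -> T (vadd x y) = vadd (T x) (T y).
Proof. apply HT. Qed.

Lemma bop_vscal a x : l2 x -> T (vscal a x) = vscal a (T x).
Proof. apply HT. Qed.

Lemma bop_norm_bound : exists M, 0 <= M /\ forall x, l2 x -> norm2 (T x) <= M * norm2 x.
Proof.
  destruct HT as (_ & _ & _ & M & HM). exists (Rmax M 0). split; [apply Rmax_r|].
  intros x Hx. eapply Rle_trans; [apply HM; auto|].
  apply Rmult_le_compat_r; [apply norm2_nonneg | apply Rmax_l].
Qed.

Lemma bop_vsub x y : l2 x -> l2 y -> T (vsub x y) = vsub (T x) (T y).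
Proof. intros. rewrite !vsub_vadd, bop_vadd, bop_vscal; auto with l2. Qed.

Lemma bop_vzero : T vzero = vzero.
Proof.
  replace vzero with (vscal (RtoC 0) vzero) at 1.
  - rewrite bop_vscal by apply l2_vzero.
    apply functional_extensionality; intros; unfold vscal, vzero; C_field.
  - apply functional_extensionality; intros; unfold vscal, vzero; C_field.
Qed.

Lemma bop_trunc f J : T (trunc f J) = fun k => csum J (fun j => Cmult (f j) (T (e j) k)).
Proof.
  induction J; [apply bop_vzero|].
  rewrite trunc_S, bop_vadd, IHJ by auto with l2. unfold vsingle. rewrite bop_vscal by apply l2_e.
  reflexivity.
Qed.

Lemma bop_trunc_lim f k : l2 f -> is_lim_Cseq (fun J => T (trunc f J) k) (T f k).
Proof.
  intros Hf. destruct bop_norm_bound as (M & HM0 & HM).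
  apply is_lim_Cseq_squeeze with (fun J => M * norm2 (vsub f (trunc f J))).
  - intros J. rewrite Cmod_minus_sym.
    change (Cminus (T f k) (T (trunc f J) k)) with (vsub (T f) (T (trunc f J)) k).
    rewrite <- bop_vsub by auto with l2.
    eapply Rle_trans; [apply Cmod_le_norm2, bop_l2; auto with l2 | apply HM; auto with l2].
  - replace 0 with (M * 0) by ring. apply (is_lim_seq_scal_l _ M 0), norm2_sub_trunc_lim; auto.
Qed.

Lemma inner_bop_trunc x y J : l2 x ->
  inner x (T (trunc y J)) = csum J (fun j => Cmult (y j) (inner x (T (e j)))).
Proof.
  intros Hx. induction J; simpl.
  - change (trunc y 0) with vzero. rewrite bop_vzero. apply inner_vzero_r.
  - rewrite trunc_S, bop_vadd, inner_vadd_r, IHJ by auto using bop_l2 with l2.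
    unfold vsingle. rewrite bop_vscal, inner_vscal_r by auto using bop_l2 with l2.
    reflexivity.
Qed.

Lemma is_lim_inner_bop x y : l2 x -> l2 y ->
  is_lim_Cseq (fun J => csum J (fun j => Cmult (y j) (inner x (T (e j))))) (inner x (T y)).
Proof.
  intros Hx Hy. destruct bop_norm_bound as (M & HM0 & HM).
  apply is_lim_Cseq_ext with (fun J => inner x (T (trunc y J))); [intros; apply inner_bop_trunc; auto|].
  apply is_lim_Cseq_squeeze with (fun J => norm2 x * (M * norm2 (vsub y (trunc y J)))).
  - intros J.
    rewrite Cmod_minus_sym, <- inner_vsub_r, <- bop_vsub by auto using bop_l2 with l2.
    eapply Rle_trans; [apply Cmod_inner_le; auto using bop_l2 with l2|].
    apply Rmult_le_compat_l; [apply norm2_nonneg | apply HM; auto with l2].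
  - replace 0 with (norm2 x * (M * 0)) by ring.
    apply (is_lim_seq_scal_l _ (norm2 x) (M * 0)), (is_lim_seq_scal_l _ M 0).
    apply norm2_sub_trunc_lim; auto.
Qed.

End BoundedOperator.

#[export] Hint Resolve bop_l2 : l2.

Lemma bop_oadd S T : bounded_op S -> bounded_op T -> bounded_op (oadd S T).
Proof.
  intros HS HT. unfold oadd. split; [|split; [|split]].
  - auto with l2.
  - intros x y Hx Hy. rewrite (bop_vadd S), (bop_vadd T) by auto.
    apply functional_extensionality; intros k; unfold vadd; ring.
  - intros a x Hx. rewrite (bop_vscal S), (bop_vscal T) by auto.
    apply functional_extensionality; intros k; unfold vadd, vscal; ring.
  - destruct (bop_norm_bound S HS) as (M1 & _ & HM1), (bop_norm_bound T HT) as (M2 & _ & HM2).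
    exists (2 * (M1 + M2)). intros x Hx. eapply Rle_trans; [apply norm2_vadd; auto with l2|].
    specialize (HM1 x Hx). specialize (HM2 x Hx). lra.
Qed.

Lemma bop_oscal a T : bounded_op T -> bounded_op (oscal a T).
Proof.
  intros HT. unfold oscal. split; [|split; [|split]].
  - auto with l2.
  - intros x y Hx Hy. rewrite (bop_vadd T) by auto.
    apply functional_extensionality; intros k; unfold vadd, vscal; ring.
  - intros b x Hx. rewrite (bop_vscal T) by auto.
    apply functional_extensionality; intros k; unfold vscal; ring.
  - destruct (bop_norm_bound T HT) as (M & _ & HM). exists (Cmod a * M). intros x Hx.
    rewrite norm2_vscal, Rmult_assoc. apply Rmult_le_compat_l; [apply Cmod_ge_0 | auto].
Qed.

Lemma bop_ocomp S T : bounded_op S -> bounded_op T -> bounded_op (ocomp S T).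
Proof.
  intros HS HT. unfold ocomp. split; [|split; [|split]].
  - auto with l2.
  - intros x y Hx Hy. rewrite (bop_vadd T), (bop_vadd S) by auto with l2. reflexivity.
  - intros b x Hx. rewrite (bop_vscal T), (bop_vscal S) by auto with l2. reflexivity.
  - destruct (bop_norm_bound S HS) as (M1 & HM10 & HM1), (bop_norm_bound T HT) as (M2 & _ & HM2).
    exists (M1 * M2). intros x Hx. eapply Rle_trans; [apply HM1; auto with l2|].
    rewrite Rmult_assoc. apply Rmult_le_compat_l; auto.
Qed.

Lemma bop_ozero : bounded_op ozero.
Proof.
  unfold ozero. split; [|split; [|split]].
  - intros; apply l2_vzero.
  - intros; apply functional_extensionality; intros k; unfold vadd, vzero; C_field.
  - intros; apply functional_extensionality; intros k; unfold vscal, vzero; C_field.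
  - exists 0. intros. rewrite norm2_vzero. lra.
Qed.

Lemma eps_vsingle n m : eps n m = fun f => vsingle n (f m).
Proof.
  apply functional_extensionality; intros f. apply functional_extensionality; intros k.
  unfold eps. rewrite vsingle_eval. reflexivity.
Qed.

Lemma bop_eps n m : bounded_op (eps n m).
Proof.
  rewrite eps_vsingle. split; [|split; [|split]].
  - intros; apply l2_vsingle.
  - intros x y _ _. apply vsingle_plus.
  - intros a x _. apply vsingle_mult.
  - exists 1. intros x Hx. rewrite norm2_vsingle, Rmult_1_l. apply Cmod_le_norm2; auto.
Qed.

Definition hs_sqnorm (X : op) : R := Series (fun k => norm2 (X (e k)) ^ 2).

Lemma HS_bounded X : HS X -> bounded_op X.
Proof. intros []; auto. Qed.

#[export] Hint Resolve HS_bounded bop_oadd bop_oscal bop_ocomp : l2.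

Lemma norm_HS_nonneg X : 0 <= norm_HS X.
Proof. apply sqrt_pos. Qed.

Lemma hs_sqnorm_nonneg X : HS X -> 0 <= hs_sqnorm X.
Proof. intros [_ H]. apply Series_nonneg; auto. intros; apply pow2_ge_0. Qed.

Lemma norm_HS_pow2 X : HS X -> norm_HS X ^ 2 = hs_sqnorm X.
Proof. intros H. unfold norm_HS. rewrite pow2_sqrt; auto. apply hs_sqnorm_nonneg; auto. Qed.

Lemma HS_oadd X Y : HS X -> HS Y -> HS (oadd X Y).
Proof.
  intros HX HY. split; [auto with l2|].
  apply ex_series_nonneg_le with (fun k => 2 * norm2 (X (e k)) ^ 2 + 2 * norm2 (Y (e k)) ^ 2).
  - intros k. split; [apply pow2_ge_0|]. unfold oadd.
    rewrite !norm2_pow2 by auto with l2. apply sqnorm_vadd; auto with l2.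
  - apply ex_series_Rplus; apply ex_series_Rscal; apply HX || apply HY.
Qed.

Lemma HS_oscal a X : HS X -> HS (oscal a X).
Proof.
  intros HX. split; [auto with l2|].
  apply ex_series_Rext with (fun k => Cmod a ^ 2 * norm2 (X (e k)) ^ 2).
  - intros k. unfold oscal. rewrite norm2_vscal. ring.
  - apply ex_series_Rscal, HX.
Qed.

Lemma HS_ocomp_l B X : bounded_op B -> HS X -> HS (ocomp B X).
Proof.
  intros HB HX. split; [auto with l2|].
  destruct (bop_norm_bound B HB) as (M & HM0 & HM).
  apply ex_series_nonneg_le with (fun k => M ^ 2 * norm2 (X (e k)) ^ 2).
  - intros k. split; [apply pow2_ge_0|]. unfold ocomp. rewrite <- Rpow_mult_distr.
    apply pow_incr. split; [apply norm2_nonneg | apply HM; auto with l2].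
  - apply ex_series_Rscal, HX.
Qed.

Lemma HS_eps m j : HS (eps m j).
Proof.
  split; [apply bop_eps|]. rewrite eps_vsingle.
  eapply ex_series_Rext; [|apply (Series_bump j 1)].
  intros k. rewrite norm2_vsingle. unfold e. rewrite (Nat.eqb_sym j k).
  destruct (k =? j)%nat; [rewrite Cmod_1 | rewrite Cmod_0]; ring.
Qed.

Lemma HS_ozero : HS ozero.
Proof.
  split; [apply bop_ozero|]. eapply ex_series_Rext; [|apply (Series_bump 0 0)].
  intros k. unfold ozero. rewrite norm2_vzero. destruct (k =? 0)%nat; ring.
Qed.

Lemma HS_osum N F : (forall n, HS (F n)) -> HS (osum N F).
Proof. intros H. induction N; simpl; [apply HS_ozero | apply HS_oadd; auto]. Qed.

#[export] Hint Resolve HS_oadd HS_oscal HS_ocomp_l HS_eps HS_ozero HS_osum : l2.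

Lemma osum_eval N F f k : osum N F f k = csum N (fun n => F n f k).
Proof. induction N; simpl; auto. unfold oadd, vadd. rewrite IHN. reflexivity. Qed.

Lemma osub_oadd X Y : osub X Y = oadd X (oscal (RtoC (-1)) Y).
Proof. apply functional_extensionality; intros x. apply vsub_vadd. Qed.

Lemma HS_osub X Y : HS X -> HS Y -> HS (osub X Y).
Proof. intros. rewrite osub_oadd. auto with l2. Qed.

#[export] Hint Resolve HS_osub : l2.

Lemma HS_row_sqnorm X n : HS X ->
  ex_series (fun j => Cmod (X (e j) n) ^ 2) /\ Series (fun j => Cmod (X (e j) n) ^ 2) <= hs_sqnorm X.
Proof.
  intros HX.
  assert (Hle : forall j, 0 <= Cmod (X (e j) n) ^ 2 <= norm2 (X (e j)) ^ 2).
  { intros j. split; [apply pow2_ge_0|]. apply pow_incr.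
    split; [apply Cmod_ge_0 | apply Cmod_le_norm2; auto with l2]. }
  split; [apply ex_series_nonneg_le with (2 := proj2 HX); auto | apply Series_le; auto; apply HX].
Qed.

Lemma Cmod_HS_apply_le Y f n : HS Y -> l2 f -> Cmod (Y f n) <= norm2 f * norm_HS Y.
Proof.
  intros HY Hf. destruct (HS_row_sqnorm Y n HY) as [Hr1 Hr2].
  apply is_lim_Cseq_Cmod_le with (u := fun J => Y (trunc f J) n); [|apply bop_trunc_lim; auto with l2].
  intros J. rewrite (bop_trunc Y) by auto with l2.
  eapply Rle_trans; [apply Cmod_csum|].
  eapply Rle_trans.
  - apply rsum_le with (b := fun j => Cmod (f j) * Cmod (Y (e j) n)). intros; rewrite Cmod_mult; lra.
  - eapply Rle_trans; [apply rsum_cauchy_schwarz_Series; auto; intros; apply Cmod_ge_0|].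
    apply Rmult_le_compat_l; [apply sqrt_pos | apply sqrt_le_1_alt; auto].
Qed.

(** * The kernel of a bounded operator on S_2 *)

Lemma le_sqrt_self_bound s K : 0 <= s -> 0 <= K -> s <= K * sqrt s -> s <= K ^ 2.
Proof.
  intros Hs HK H. pose proof (sqrt_sqrt s Hs). pose proof (sqrt_pos s).
  assert (sqrt s <= K) by nra. nra.
Qed.

Definition row_op (m J : nat) (c : nat -> C) : op := osum J (fun j => oscal (c j) (eps m j)).

Lemma row_op_e m J c k : row_op m J c (e k) = vsingle m (if (k <? J)%nat then c k else RtoC 0).
Proof.
  apply functional_extensionality; intros i. unfold row_op. rewrite osum_eval, vsingle_eval.
  unfold oscal, vscal, eps. destruct (i =? m)%nat.
  - rewrite <- csum_kronecker. apply csum_ext. intros j _. unfold e.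
    destruct (k =? j)%nat eqn:E; rewrite (Nat.eqb_sym j k), E; C_field.
  - apply csum_zero. intros; C_field.
Qed.

Lemma HS_row_op m J c : HS (row_op m J c).
Proof. unfold row_op. auto with l2. Qed.

Lemma hs_sqnorm_row_op m J c : hs_sqnorm (row_op m J c) = rsum J (fun k => Cmod (c k) ^ 2).
Proof.
  unfold hs_sqnorm. rewrite <- (proj2 (Series_head (fun k => Cmod (c k) ^ 2) J)).
  apply Series_ext. intros k. rewrite row_op_e, norm2_vsingle. unfold head.
  destruct (k <? J)%nat; auto. rewrite Cmod_0. ring.
Qed.

Lemma hs_sqnorm_sub_row_op eta m J :
  hs_sqnorm (osub (ocomp (eps m m) eta) (row_op m J (fun j => eta (e j) m))) =
  Series (tail (fun k => Cmod (eta (e k) m) ^ 2) J).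
Proof.
  unfold hs_sqnorm. apply Series_ext. intros k.
  replace (osub (ocomp (eps m m) eta) (row_op m J (fun j => eta (e j) m)) (e k))
    with (vsingle m (if (k <? J)%nat then RtoC 0 else eta (e k) m)).
  - rewrite norm2_vsingle. unfold tail. destruct (k <? J)%nat; auto. rewrite Cmod_0; ring.
  - apply functional_extensionality; intros i. unfold osub, vsub.
    rewrite row_op_e, !vsingle_eval. unfold ocomp, eps.
    destruct (i =? m)%nat, (k <? J)%nat; C_field.
Qed.

Definition kernel_op (A : opS) (n m : nat) : op := fun f j => A (eps m j) f n.

Section OperatorOnS2.
Variable A : opS.
Hypothesis hB : bounded_opS A.

Lemma A_HS X : HS X -> HS (A X).
Proof. apply hB. Qed.

#[local] Hint Resolve A_HS : l2.

Lemma A_oadd X Y x : HS X -> HS Y -> l2 x -> A (oadd X Y) x = vadd (A X x) (A Y x).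
Proof. intros; apply (proj1 (proj2 hB)); auto. Qed.

Lemma A_oscal a X x : HS X -> l2 x -> A (oscal a X) x = vscal a (A X x).
Proof. intros; apply (proj1 (proj2 (proj2 hB))); auto. Qed.

Lemma A_norm_bound : exists M, 0 <= M /\ forall X, HS X -> norm_HS (A X) <= M * norm_HS X.
Proof.
  destruct hB as (_ & _ & _ & M & HM). exists (Rmax M 0). split; [apply Rmax_r|].
  intros X HX. eapply Rle_trans; [apply HM; auto|].
  apply Rmult_le_compat_r; [apply norm_HS_nonneg | apply Rmax_l].
Qed.

Lemma A_hs_sqnorm_bound : exists M, forall X, HS X -> hs_sqnorm (A X) <= M ^ 2 * hs_sqnorm X.
Proof.
  destruct A_norm_bound as (M & HM0 & HM). exists M. intros X HX.
  rewrite <- !norm_HS_pow2, <- Rpow_mult_distr by auto with l2.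
  apply pow_incr. split; [apply norm_HS_nonneg | auto].
Qed.

Lemma A_osub X Y x : HS X -> HS Y -> l2 x -> A (osub X Y) x = vsub (A X x) (A Y x).
Proof. intros. rewrite osub_oadd, A_oadd, A_oscal, vsub_vadd; auto with l2. Qed.

Lemma A_ozero x : l2 x -> A ozero x = vzero.
Proof.
  intros Hx. replace ozero with (oscal (RtoC 0) ozero) at 1.
  - rewrite A_oscal by auto with l2.
    apply functional_extensionality; intros k. unfold vscal, vzero. C_field.
  - apply functional_extensionality; intros f. apply functional_extensionality; intros k.
    unfold oscal, ozero, vscal, vzero. C_field.
Qed.

Lemma A_osum N F x k : (forall n, HS (F n)) -> l2 x -> A (osum N F) x k = csum N (fun n => A (F n) x k).
Proof.
  intros HF Hx. induction N; simpl.
  - rewrite A_ozero; auto.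
  - rewrite A_oadd by auto with l2. unfold vadd. rewrite IHN. reflexivity.
Qed.

Lemma A_row_op m J c f n : l2 f ->
  A (row_op m J c) f n = csum J (fun j => Cmult (c j) (kernel_op A n m f j)).
Proof.
  intros Hf. unfold row_op. rewrite A_osum by auto with l2.
  apply csum_ext. intros j _. rewrite A_oscal by auto with l2. reflexivity.
Qed.

(* Test [A] against the row operator with entries [conj (T f)_j]: it returns [sum_j |(T f)_j|^2]. *)
Lemma kernel_op_rsum_le M n m f J : 0 <= M -> (forall X, HS X -> norm_HS (A X) <= M * norm_HS X) ->
  l2 f -> rsum J (fun k => Cmod (kernel_op A n m f k) ^ 2) <= (M * norm2 f) ^ 2.
Proof.
  intros HM0 HM Hf. set (w := kernel_op A n m f).
  set (Y := row_op m J (fun j => Cconj (w j))).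
  set (s := rsum J (fun k => Cmod (w k) ^ 2)).
  assert (E : A Y f n = RtoC s) by (unfold Y; rewrite A_row_op; auto; apply csum_Cmod_pow2).
  apply le_sqrt_self_bound.
  - apply rsum_nonneg; intros; apply pow2_ge_0.
  - pose proof (norm2_nonneg f). apply Rmult_le_pos; auto.
  - replace s with (Cmod (A Y f n)) at 1
      by (rewrite E, Cmod_R, Rabs_pos_eq; auto; apply rsum_nonneg; intros; apply pow2_ge_0).
    eapply Rle_trans; [apply Cmod_HS_apply_le; [apply A_HS, HS_row_op | auto]|].
    rewrite (Rmult_comm M), Rmult_assoc. apply Rmult_le_compat_l; [apply norm2_nonneg|].
    eapply Rle_trans; [apply HM, HS_row_op|]. right. f_equal.
    unfold norm_HS. fold (hs_sqnorm Y). unfold Y. rewrite hs_sqnorm_row_op.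
    f_equal. apply rsum_ext. intros; rewrite Cmod_conj; auto.
Qed.

Lemma bop_kernel_op n m : bounded_op (kernel_op A n m).
Proof.
  destruct A_norm_bound as (M & HM0 & HM).
  assert (Hser : forall f, l2 f ->
            l2 (kernel_op A n m f) /\ sqnorm (kernel_op A n m f) <= (M * norm2 f) ^ 2).
  { intros f Hf. apply ex_series_rsum_bounded; [intros; apply pow2_ge_0|].
    intros; apply kernel_op_rsum_le; auto. }
  split; [|split; [|split]].
  - apply Hser.
  - intros x y Hx Hy. apply functional_extensionality; intros j. unfold kernel_op.
    rewrite (bop_vadd (A (eps m j))) by auto with l2. reflexivity.
  - intros a x Hx. apply functional_extensionality; intros j. unfold kernel_op.
    rewrite (bop_vscal (A (eps m j))) by auto with l2. reflexivity.
  - exists M. intros x Hx. destruct (Hser x Hx) as [Hl Hn].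
    pose proof (norm2_nonneg x).
    unfold norm2 at 1. rewrite <- (sqrt_pow2 (M * norm2 x)) by (apply Rmult_le_pos; auto).
    apply sqrt_le_1_alt. auto.
Qed.

#[local] Hint Resolve bop_kernel_op : l2.

(* Approximate row [m] of [eta] by its truncations [row_op m J _] and use the continuity of [A]. *)
Lemma A_eps_comp eta f n m : HS eta -> l2 f ->
  A (ocomp (eps m m) eta) f n = eta (kernel_op A n m f) m.
Proof.
  intros He Hf.
  set (c := fun j => eta (e j) m).
  set (E := ocomp (eps m m) eta).
  assert (HE : HS E) by (unfold E; auto with l2).
  assert (HY : forall J, HS (row_op m J c)) by (intros; apply HS_row_op).
  set (u := fun J => A (row_op m J c) f n).
  assert (H1 : is_lim_Cseq u (eta (kernel_op A n m f) m)).
  { eapply is_lim_Cseq_ext; [|apply (bop_trunc_lim eta); auto with l2].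
    intros J. unfold u. rewrite A_row_op, (bop_trunc eta) by auto with l2.
    apply csum_ext. intros; unfold c; ring. }
  assert (H2 : is_lim_Cseq u (A E f n)).
  { destruct A_norm_bound as (M & HM0 & HM).
    destruct (HS_row_sqnorm eta m He) as [Hr _].
    apply is_lim_Cseq_squeeze with
      (fun J => norm2 f * (M * sqrt (Series (tail (fun k => Cmod (c k) ^ 2) J)))).
    - intros J. rewrite Cmod_minus_sym. unfold u.
      change (Cminus (A E f n) (A (row_op m J c) f n)) with (vsub (A E f) (A (row_op m J c) f) n).
      rewrite <- A_osub by auto.
      eapply Rle_trans; [apply Cmod_HS_apply_le; auto with l2|].
      apply Rmult_le_compat_l; [apply norm2_nonneg|].
      eapply Rle_trans; [apply HM; auto with l2|].
      apply Rmult_le_compat_l; auto. right. unfold norm_HS. f_equal.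
      apply hs_sqnorm_sub_row_op.
    - replace 0 with (norm2 f * (M * 0)) by ring.
      apply (is_lim_seq_scal_l _ (norm2 f) (M * 0)), (is_lim_seq_scal_l _ M 0).
      apply is_lim_seq_sqrt0; [intros; apply Series_tail_nonneg; auto; intros; apply pow2_ge_0|].
      apply Series_tail_lim; auto. }
  eapply is_lim_Cseq_unique; eauto.
Qed.

End OperatorOnS2.

#[export] Hint Resolve A_HS bop_kernel_op : l2.

(** * Symmetry and coercivity of the kernel *)

Definition rank_one (m : nat) (x : vec) : op := fun g => vsingle m (inner x g).

Lemma bop_rank_one m x : l2 x -> bounded_op (rank_one m x).
Proof.
  intros Hx. unfold rank_one. split; [|split; [|split]].
  - intros; apply l2_vsingle.
  - intros y z Hy Hz. rewrite inner_vadd_r, vsingle_plus; auto.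
  - intros a y Hy. rewrite inner_vscal_r, vsingle_mult; auto.
  - exists (norm2 x). intros y Hy. rewrite norm2_vsingle. apply Cmod_inner_le; auto.
Qed.

Lemma rank_one_e m x k : rank_one m x (e k) = vsingle m (Cconj (x k)).
Proof. unfold rank_one. rewrite inner_e_r. auto. Qed.

Lemma HS_rank_one m x : l2 x -> HS (rank_one m x).
Proof.
  intros Hx. split; [apply bop_rank_one; auto|].
  eapply ex_series_Rext; [|apply Hx]. intros k. simpl.
  rewrite rank_one_e, norm2_vsingle, Cmod_conj. auto.
Qed.

#[export] Hint Resolve HS_rank_one : l2.

Lemma hs_sqnorm_rank_one m x : hs_sqnorm (rank_one m x) = sqnorm x.
Proof.
  unfold hs_sqnorm, sqnorm. apply Series_ext. intros k.
  rewrite rank_one_e, norm2_vsingle, Cmod_conj. auto.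
Qed.

Lemma eps_comp_rank_one m x : ocomp (eps m m) (rank_one m x) = rank_one m x.
Proof.
  apply functional_extensionality; intros g. unfold ocomp. rewrite eps_vsingle.
  unfold rank_one. rewrite vsingle_eval, Nat.eqb_refl. auto.
Qed.

Lemma A_rank_one A m x f k : bounded_opS A -> l2 x -> l2 f ->
  A (rank_one m x) f k = inner x (kernel_op A k m f).
Proof.
  intros hB Hx Hf. rewrite <- eps_comp_rank_one, A_eps_comp by auto with l2.
  unfold rank_one. rewrite vsingle_eval, Nat.eqb_refl. auto.
Qed.

Lemma CSeries_scal_R t s : CSeries (fun k => Cmult (RtoC t) (s k)) = Cmult (RtoC t) (CSeries s).
Proof.
  unfold CSeries.
  rewrite (Series_ext _ (fun k => t * Re (s k))), (Series_ext (fun n => Im _) (fun k => t * Im (s k))).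
  - rewrite !Series_scal_l. unfold RtoC, Cmult. simpl. apply injective_projections; simpl; ring.
  - intros; unfold RtoC, Cmult, Re, Im; simpl; ring.
  - intros; unfold RtoC, Cmult, Re, Im; simpl; ring.
Qed.

Lemma CSeries_zero s : (forall k, s k = RtoC 0) -> CSeries s = RtoC 0.
Proof.
  intros H. apply CSeries_of_lim, is_lim_Cseq_stationary with 0%nat. intros J _.
  apply csum_zero; auto.
Qed.

Section Quadratic.
Variable A : opS.
Hypothesis hB : bounded_opS A.

Lemma inner2_scal_R r eta : HS eta ->
  inner2 (oscal (RtoC r) eta) (A (oscal (RtoC r) eta)) = Cmult (RtoC (r ^ 2)) (inner2 eta (A eta)).
Proof.
  intros He. unfold inner2. rewrite <- CSeries_scal_R. f_equal.
  apply functional_extensionality; intros k. rewrite A_oscal by auto with l2. unfold oscal.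
  rewrite inner_vscal_l, inner_vscal_r by auto with l2.
  unfold RtoC, Cconj, Cmult. simpl. apply injective_projections; simpl; ring.
Qed.

Lemma inner2_hs_sqnorm_0 eta : HS eta -> hs_sqnorm eta = 0 -> inner2 eta (A eta) = RtoC 0.
Proof.
  intros He H0. unfold inner2. apply CSeries_zero. intros k.
  replace (eta (e k)) with vzero; [apply inner_vzero_l|].
  symmetry. apply norm2_eq_0; [auto with l2|].
  assert (Hk : norm2 (eta (e k)) ^ 2 <= hs_sqnorm eta)
    by (apply (term_le_Series (fun k => norm2 (eta (e k)) ^ 2)); [intros; apply pow2_ge_0 | apply He]).
  pose proof (norm2_nonneg (eta (e k))). nra.
Qed.

End Quadratic.

(* Homogeneity: the bound on the unit sphere of [S_2] extends to all of [S_2]. *)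
Lemma posdefS_coercive A : posdefS A -> exists c, 0 < c /\ forall eta, HS eta ->
  Im (inner2 eta (A eta)) = 0 /\ c * hs_sqnorm eta <= Re (inner2 eta (A eta)).
Proof.
  intros [hB (c & Hc & H)]. exists c. split; auto. intros eta He.
  destruct (Req_dec (hs_sqnorm eta) 0) as [H0 | H0].
  - rewrite inner2_hs_sqnorm_0, H0 by auto. simpl. lra.
  - set (r := norm_HS eta).
    assert (Hr2 : r ^ 2 = hs_sqnorm eta) by (apply norm_HS_pow2; auto).
    assert (Hr : 0 < r).
    { assert (0 <= r) by apply norm_HS_nonneg.
      destruct (Req_dec r 0) as [E | E]; [|lra]. rewrite E in Hr2. simpl in Hr2. lra. }
    assert (Hn : norm_HS (oscal (RtoC (/ r)) eta) = 1).
    { unfold norm_HS. rewrite (Series_ext _ (fun k => (/ r) ^ 2 * norm2 (eta (e k)) ^ 2)).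
      - rewrite Series_scal_l. fold (hs_sqnorm eta). rewrite <- Hr2.
        replace ((/ r) ^ 2 * r ^ 2) with 1 by (field; lra). apply sqrt_1.
      - intros k. unfold oscal. rewrite norm2_vscal, Cmod_R, Rabs_pos_eq; [ring|].
        apply Rlt_le, Rinv_0_lt_compat; auto. }
    destruct (H _ (HS_oscal _ _ He) Hn) as [H1 H2].
    rewrite inner2_scal_R in H1, H2 by auto.
    destruct (inner2 eta (A eta)) as [a b]. simpl in H1, H2 |- *.
    assert (Hq : 0 < / r * (/ r * 1))
      by (rewrite Rmult_1_r; apply Rmult_lt_0_compat; apply Rinv_0_lt_compat; auto).
    split; [nra|].
    rewrite <- Hr2. replace a with (r * (r * 1) * (/ r * (/ r * 1) * a - 0 * b)) by (field; lra).
    rewrite Rmult_comm. apply Rmult_le_compat_l; [simpl; nra | lra].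
Qed.

Section KernelSymmetry.
Variable A : opS.
Hypothesis hA : posdefS A.
Let hB : bounded_opS A := proj1 hA.

Lemma inner2_rank_one_pair m n x y (lam : C) : l2 x -> l2 y ->
  let eta := oadd (rank_one m x) (oscal lam (rank_one n y)) in
  inner2 eta (A eta) =
  Cplus (Cplus (Cplus (inner x (kernel_op A m m x)) (Cmult lam (inner y (kernel_op A m n x))))
               (Cmult (Cconj lam) (inner x (kernel_op A n m y))))
        (Cmult (Cmult (Cconj lam) lam) (inner y (kernel_op A n n y))).
Proof.
  intros Hx Hy eta. set (T := kernel_op A).
  assert (Hs : forall j, inner (eta (e j)) (A eta (e j)) =
     Cplus (Cplus (Cplus (Cmult (x j) (inner x (T m m (e j))))
                         (Cmult lam (Cmult (x j) (inner y (T m n (e j))))))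
                  (Cmult (Cconj lam) (Cmult (y j) (inner x (T n m (e j))))))
           (Cmult (Cmult (Cconj lam) lam) (Cmult (y j) (inner y (T n n (e j)))))).
  { intros j. unfold eta.
    assert (Hu : l2 (A (rank_one m x) (e j))) by auto with l2.
    assert (Hv : l2 (A (rank_one n y) (e j))) by auto with l2.
    rewrite (A_oadd A hB), (A_oscal A hB) by auto with l2.
    unfold oadd, oscal. rewrite !rank_one_e.
    rewrite inner_vadd_l, inner_vscal_l, !inner_vsingle_l by auto with l2.
    unfold vadd, vscal. rewrite !(A_rank_one A) by auto with l2.
    fold T. rewrite !Cconj_conj. ring. }
  unfold inner2. apply CSeries_of_lim.
  apply is_lim_Cseq_ext with (fun J =>
      Cplus (Cplus (Cplus (csum J (fun j => Cmult (x j) (inner x (T m m (e j)))))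
                          (Cmult lam (csum J (fun j => Cmult (x j) (inner y (T m n (e j)))))))
                   (Cmult (Cconj lam) (csum J (fun j => Cmult (y j) (inner x (T n m (e j)))))))
            (Cmult (Cmult (Cconj lam) lam) (csum J (fun j => Cmult (y j) (inner y (T n n (e j))))))).
  - intros J. rewrite (csum_ext J _ _ (fun j _ => Hs j)), !csum_plus, !csum_scal. reflexivity.
  - repeat apply is_lim_Cseq_plus; try apply is_lim_Cseq_scal; apply is_lim_inner_bop;
      unfold T; auto with l2.
Qed.

Lemma HS_rank_one_pair m n x y lam : l2 x -> l2 y -> HS (oadd (rank_one m x) (oscal lam (rank_one n y))).
Proof. auto with l2. Qed.

Lemma inner2_A_real eta : HS eta -> Im (inner2 eta (A eta)) = 0.
Proof. intros He. destruct (posdefS_coercive A hA) as (c & _ & H). apply H; auto. Qed.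

Lemma kernel_op_diag_real m x : l2 x -> Im (inner x (kernel_op A m m x)) = 0.
Proof.
  intros Hx. pose proof (inner2_A_real _ (HS_rank_one_pair m m x x (RtoC 0) Hx Hx)) as H.
  rewrite inner2_rank_one_pair in H by auto.
  destruct (inner x (kernel_op A m m x)). unfold Cplus, Cmult, Cconj, RtoC, Im in *. simpl in *. lra.
Qed.

(* Polarization: reality of the quadratic form at [lam = 1] and [lam = i]. *)
Lemma kernel_op_adjoint n m x y : l2 x -> l2 y ->
  inner (kernel_op A n m y) x = inner y (kernel_op A m n x).
Proof.
  intros Hx Hy.
  pose proof (inner2_A_real _ (HS_rank_one_pair m n x y (RtoC 1) Hx Hy)) as H1.
  pose proof (inner2_A_real _ (HS_rank_one_pair m n x y Ci Hx Hy)) as H2.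
  rewrite inner2_rank_one_pair in H1, H2 by auto.
  pose proof (kernel_op_diag_real m x Hx) as D1. pose proof (kernel_op_diag_real n y Hy) as D2.
  rewrite (inner_conj x (kernel_op A n m y)) by auto with l2.
  destruct (inner x (kernel_op A m m x)), (inner y (kernel_op A n n y)),
           (inner y (kernel_op A m n x)), (inner x (kernel_op A n m y)).
  unfold Cplus, Cmult, Cconj, RtoC, Ci, Im in *. simpl in *.
  apply injective_projections; simpl; lra.
Qed.

Lemma kernel_op_diag_coercive :
  exists c, 0 < c /\ forall m x, l2 x -> c * sqnorm x <= Re (inner x (kernel_op A m m x)).
Proof.
  destruct (posdefS_coercive A hA) as (c & Hc & H). exists c. split; auto. intros m x Hx.
  destruct (H _ (HS_rank_one_pair m m x x (RtoC 0) Hx Hx)) as [_ H2].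
  rewrite inner2_rank_one_pair in H2 by auto.
  replace (oadd (rank_one m x) (oscal (RtoC 0) (rank_one m x))) with (rank_one m x) in H2.
  - rewrite hs_sqnorm_rank_one in H2.
    destruct (inner x (kernel_op A m m x)). unfold Cplus, Cmult, Cconj, RtoC, Re in *. simpl in *. lra.
  - apply functional_extensionality; intros g. apply functional_extensionality; intros k.
    unfold oadd, oscal, vadd, vscal. ring.
Qed.

End KernelSymmetry.

(** * The coefficient operators *)

Definition w_plus : C := Cdiv (Cplus (RtoC 1) Ci) (RtoC 2).
Definition w_minus : C := Cdiv (Cminus (RtoC 1) Ci) (RtoC 2).

Lemma Cconj_w_plus : Cconj w_plus = w_minus.
Proof. unfold w_plus, w_minus. C_field. Qed.

Lemma w_plus_add_minus : Cplus w_plus w_minus = RtoC 1.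
Proof. unfold w_plus, w_minus. C_field. Qed.

Lemma w_plus_mul_minus : Cmult (RtoC 2) (Cmult w_plus w_minus) = RtoC 1.
Proof. unfold w_plus, w_minus. C_field. Qed.

Lemma w_plus_minus_sqr : Cplus (Cmult w_plus w_plus) (Cmult w_minus w_minus) = RtoC 0.
Proof. unfold w_plus, w_minus. C_field. Qed.

Lemma heps_eval n m g k : heps n m g k =
  Cplus (Cmult w_plus (if (k =? n)%nat then g m else RtoC 0))
        (Cmult w_minus (if (k =? m)%nat then g n else RtoC 0)).
Proof. reflexivity. Qed.

Definition b11_op (d : R) : op :=
  fun g => vadd (vscal (RtoC d) g) (vscal (Cmult (RtoC (1 - d)) (g 0%nat)) (e 0)).

Lemma b11_op_eval d z k :
  b11_op d z k = Cplus (Cmult (RtoC d) (z k)) (Cmult (Cmult (RtoC (1 - d)) (z 0%nat)) (e 0 k)).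
Proof. reflexivity. Qed.

Lemma bop_b11_op d : bounded_op (b11_op d).
Proof.
  unfold b11_op. split; [|split; [|split]].
  - auto with l2.
  - intros x y _ _. apply functional_extensionality; intros k. unfold vadd, vscal. ring.
  - intros a x _. apply functional_extensionality; intros k. unfold vadd, vscal. ring.
  - exists (2 * (Rabs d + Rabs (1 - d))). intros x Hx.
    eapply Rle_trans; [apply norm2_vadd; auto with l2|].
    rewrite !norm2_vscal, norm2_e, Cmod_mult, !Cmod_R.
    pose proof (Cmod_le_norm2 x 0 Hx). pose proof (Rabs_pos (1 - d)). pose proof (Rabs_pos d).
    pose proof (Cmod_ge_0 (x 0%nat)). pose proof (norm2_nonneg x).
    assert (Rabs (1 - d) * Cmod (x 0%nat) <= Rabs (1 - d) * norm2 x) by (apply Rmult_le_compat_l; auto).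
    nra.
Qed.

Lemma inner_b11_op_r d x y : l2 x -> l2 y -> inner x (b11_op d y) =
  Cplus (Cmult (RtoC d) (inner x y)) (Cmult (RtoC (1 - d)) (Cmult (Cconj (x 0%nat)) (y 0%nat))).
Proof.
  intros Hx Hy. unfold b11_op.
  rewrite inner_vadd_r, !inner_vscal_r, inner_e_r by auto with l2. ring.
Qed.

Lemma selfadjoint_b11_op d : selfadjoint (b11_op d).
Proof.
  split; [apply bop_b11_op|]. intros x y Hx Hy.
  rewrite inner_b11_op_r, inner_conj, inner_b11_op_r, (inner_conj y x) by auto using bop_l2, bop_b11_op.
  rewrite !Cplus_conj, !Cmult_conj, !Cconj_conj. unfold RtoC, Cconj. C_field.
Qed.

Lemma posdef_b11_op d : 0 < d <= 1 -> posdef (b11_op d).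
Proof.
  intros Hd. split; [apply bop_b11_op|]. exists d. split; [lra|]. intros x Hx Hn.
  rewrite inner_b11_op_r, inner_self, <- norm2_pow2, Hn by auto.
  rewrite (Cmult_comm (Cconj _)), <- Cmod2_conj.
  pose proof (pow2_ge_0 (Cmod (x 0%nat))).
  unfold RtoC, Cplus, Cmult, Re, Im. simpl in *. split; [ring | nra].
Qed.

(* The operators [a n m] of the theorem, with [T := kernel_op A] and [b11 := b11_op d]. *)
Definition coef_op (T : nat -> nat -> op) (d : R) (n m : nat) : op :=
  if (n =? m)%nat then
    (if (n =? 0)%nat then T 0%nat 0%nat else oadd (T n n) (oscal (RtoC (- d)) (T 0%nat 0%nat)))
  else oadd (oscal w_minus (T n m)) (oscal w_plus (T m n)).

Lemma selfadjoint_oadd S T : selfadjoint S -> selfadjoint T -> selfadjoint (oadd S T).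
Proof.
  intros [HS HSa] [HT HTa]. split; [auto with l2|]. intros x y Hx Hy. unfold oadd.
  rewrite inner_vadd_l, inner_vadd_r, HSa, HTa by auto with l2. reflexivity.
Qed.

Lemma selfadjoint_oscal_R r T : selfadjoint T -> selfadjoint (oscal (RtoC r) T).
Proof.
  intros [HT HTa]. split; [auto with l2|]. intros x y Hx Hy. unfold oscal.
  rewrite inner_vscal_l, inner_vscal_r, HTa by auto with l2.
  f_equal. unfold RtoC, Cconj. C_field.
Qed.

Section CoefficientOperators.
Variable T : nat -> nat -> op.
Hypothesis HT : forall n m, bounded_op (T n m).
Hypothesis HT_adj : forall n m x y, l2 x -> l2 y -> inner (T n m y) x = inner y (T m n x).

Lemma selfadjoint_diag n : selfadjoint (T n n).
Proof. split; [apply HT | intros; apply HT_adj; auto]. Qed.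

Lemma selfadjoint_offdiag a n m : selfadjoint (oadd (oscal (Cconj a) (T n m)) (oscal a (T m n))).
Proof.
  split; [auto with l2|]. intros x y Hx Hy. unfold oadd, oscal.
  rewrite inner_vadd_l, inner_vadd_r, !inner_vscal_l, !inner_vscal_r, !HT_adj by auto with l2.
  rewrite Cconj_conj. ring.
Qed.

Lemma selfadjoint_coef_op d n m : selfadjoint (coef_op T d n m).
Proof.
  unfold coef_op. destruct (n =? m)%nat; [destruct (n =? 0)%nat|].
  - apply selfadjoint_diag.
  - apply selfadjoint_oadd; [|apply selfadjoint_oscal_R]; apply selfadjoint_diag.
  - rewrite <- Cconj_w_plus. apply selfadjoint_offdiag.
Qed.

End CoefficientOperators.

Lemma partial_sum_eval a eta N f k : partial_sum a eta N f k =
  csum N (fun n => csum N (fun m =>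
    if ((n =? 0) && (m =? 0))%nat then RtoC 0 else heps n m (eta (a n m f)) k)).
Proof.
  unfold partial_sum. rewrite osum_eval. apply csum_ext. intros n _. rewrite osum_eval.
  apply csum_ext. intros m _. destruct ((n =? 0) && (m =? 0))%nat; reflexivity.
Qed.

(* Row [k] of a sum of [heps n m] terms only sees the pairs with [n = k] or [m = k]. *)
Lemma csum_heps_row N k (V : nat -> nat -> vec) :
  csum N (fun n => csum N (fun m =>
    if ((n =? 0) && (m =? 0))%nat then RtoC 0 else heps n m (V n m) k)) =
  if (k <? N)%nat then
    csum N (fun m => if ((k =? 0) && (m =? 0))%nat then RtoC 0
                     else Cplus (Cmult w_plus (V k m m)) (Cmult w_minus (V m k m)))
  else RtoC 0.
Proof.
  set (O := fun n m => ((n =? 0) && (m =? 0))%nat).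
  set (P := fun n m => if O n m then RtoC 0 else Cmult w_plus (V n m m)).
  set (Q := fun n => if O n k then RtoC 0 else Cmult w_minus (V n k n)).
  rewrite (csum_ext N _ (fun n => Cplus (if (k =? n)%nat then csum N (P n) else RtoC 0)
                                        (if (k <? N)%nat then Q n else RtoC 0))).
  - rewrite csum_plus, csum_kronecker_l, csum_if.
    destruct (k <? N)%nat; [|ring].
    rewrite <- csum_plus. apply csum_ext. intros m _. unfold P, Q, O.
    rewrite (andb_comm (m =? 0)%nat). destruct ((k =? 0) && (m =? 0))%nat; ring.
  - intros n _. rewrite <- (csum_kronecker N k (fun _ => Q n)).
    rewrite <- csum_if, <- csum_plus. apply csum_ext. intros m _. rewrite heps_eval. unfold P, Q, O.
    destruct (Nat.eqb_spec k n), (Nat.eqb_spec m k), (Nat.eqb_spec k m); subst; try lia;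
      rewrite ?Nat.eqb_refl;
      repeat match goal with |- context [if ?b then _ else _] => destruct b end; ring.
Qed.

Definition drop_rows (N : nat) (eta : op) : op := osub eta (osum N (fun m => ocomp (eps m m) eta)).

Lemma drop_rows_e N eta j :
  drop_rows N eta (e j) = fun k => if (k <? N)%nat then RtoC 0 else eta (e j) k.
Proof.
  apply functional_extensionality; intros k. unfold drop_rows, osub, vsub. rewrite osum_eval.
  rewrite (csum_ext N _ (fun m => if (k =? m)%nat then eta (e j) m else RtoC 0)).
  - rewrite csum_kronecker_l. destruct (Nat.ltb_spec k N); subst; ring.
  - intros m _. unfold ocomp, eps. destruct (Nat.eqb_spec k m); subst; auto.
Qed.

Lemma HS_drop_rows N eta : HS eta -> HS (drop_rows N eta).
Proof. intros. unfold drop_rows. auto with l2. Qed.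

Section Remainder.
Variable A : opS.
Hypothesis hB : bounded_opS A.
Variable d : R.
Variable eta : op.
Hypothesis He : HS eta.

Let T := kernel_op A.
Let a := coef_op T d.

Lemma heps_pair_offdiag k m f : l2 f -> (k <> m)%nat ->
  Cplus (Cmult w_plus (eta (a k m f) m)) (Cmult w_minus (eta (a m k f) m)) = eta (T k m f) m.
Proof.
  intros Hf Hkm. unfold a, coef_op.
  destruct (Nat.eqb_spec k m), (Nat.eqb_spec m k); try lia.
  unfold oadd, oscal. rewrite !(bop_vadd eta), !(bop_vscal eta) by (unfold T; auto with l2).
  unfold vadd, vscal.
  transitivity (Cplus (Cmult (Cmult (RtoC 2) (Cmult w_plus w_minus)) (eta (T k m f) m))
                      (Cmult (Cplus (Cmult w_plus w_plus) (Cmult w_minus w_minus)) (eta (T m k f) m))).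
  - ring.
  - rewrite w_plus_mul_minus, w_plus_minus_sqr. ring.
Qed.

Lemma heps_pair_diag k f : l2 f -> (k <> 0)%nat ->
  Cplus (Cmult w_plus (eta (a k k f) k)) (Cmult w_minus (eta (a k k f) k)) =
  Cminus (eta (T k k f) k) (Cmult (RtoC d) (eta (T 0%nat 0%nat f) k)).
Proof.
  intros Hf Hk. unfold a, coef_op. rewrite Nat.eqb_refl. destruct (Nat.eqb_spec k 0); try lia.
  unfold oadd, oscal. rewrite (bop_vadd eta), (bop_vscal eta) by (unfold T; auto with l2).
  unfold vadd, vscal. rewrite <- Cmult_plus_distr_r, w_plus_add_minus.
  unfold RtoC. C_field.
Qed.

Definition remainder (N : nat) : op :=
  osub (A eta) (oadd (ocomp (b11_op d) (ocomp eta (a 0%nat 0%nat))) (partial_sum a eta N)).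

Lemma remainder_eval N f k : (1 <= N)%nat -> l2 f ->
  remainder N f k = if (k <? N)%nat then A (drop_rows N eta) f k
                    else Cminus (A eta f k) (Cmult (RtoC d) (eta (T 0%nat 0%nat f) k)).
Proof.
  intros HN Hf. unfold remainder, osub, vsub, oadd, vadd, ocomp.
  rewrite partial_sum_eval, csum_heps_row, b11_op_eval.
  change (a 0%nat 0%nat) with (T 0%nat 0%nat).
  set (g := fun m => eta (T k m f) m).
  destruct (Nat.ltb_spec k N) as [HkN | HkN].
  - unfold drop_rows. rewrite (A_osub A) by auto with l2. unfold vsub.
    rewrite (A_osum A) by auto with l2.
    rewrite (csum_ext N (fun m => A (ocomp (eps m m) eta) f k) g)
      by (intros; apply A_eps_comp; auto).
    rewrite (csum_ext N _ (fun m => if (m =? k)%nat then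
               (if (k =? 0)%nat then RtoC 0 else Cminus (g k) (Cmult (RtoC d) (eta (T 0%nat 0%nat f) k)))
             else g m)).
    + rewrite csum_update by auto. unfold e.
      destruct (Nat.eqb_spec k 0); [subst k; simpl; unfold g; unfold RtoC; C_field | ring].
    + intros m _. destruct (Nat.eqb_spec m k) as [-> | Hmk].
      * destruct (Nat.eqb_spec k 0) as [-> | Hk]; [reflexivity|]. apply heps_pair_diag; auto.
      * replace ((k =? 0) && (m =? 0))%nat with false
          by (destruct (Nat.eqb_spec k 0), (Nat.eqb_spec m 0); lia || reflexivity).
        apply heps_pair_offdiag; auto.
  - unfold e. destruct (Nat.eqb_spec k 0); [lia | ring].
Qed.

End Remainder.

(** * Convergence of the partial sums *)

Definition row_tail (X : op) (N : nat) : R :=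
  Series (fun j => Series (tail (fun k => Cmod (X (e j) k) ^ 2) N)).

Lemma HS_columns X : HS X ->
  (forall j, ex_series (fun k => Cmod (X (e j) k) ^ 2)) /\
  ex_series (fun j => Series (fun k => Cmod (X (e j) k) ^ 2)).
Proof.
  intros HX. split; [intros j; apply (bop_l2 X); auto with l2|].
  eapply ex_series_Rext; [|apply (proj2 HX)]. intros j. apply norm2_pow2. auto with l2.
Qed.

Lemma row_tail_lim X : HS X ->
  (forall N, ex_series (fun j => Series (tail (fun k => Cmod (X (e j) k) ^ 2) N))) /\
  is_lim_seq (row_tail X) 0.
Proof.
  intros HX. destruct (HS_columns X HX) as [H1 H2].
  apply double_Series_tail_lim; auto. intros; apply pow2_ge_0.
Qed.

Lemma row_tail_nonneg X N : HS X -> 0 <= row_tail X N.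
Proof.
  intros HX. destruct (HS_columns X HX) as [H1 _].
  apply Series_nonneg; [|apply (row_tail_lim X HX)].
  intros j. apply Series_tail_nonneg; auto. intros; apply pow2_ge_0.
Qed.

Lemma hs_sqnorm_drop_rows N X : HS X -> hs_sqnorm (drop_rows N X) = row_tail X N.
Proof.
  intros HX. unfold hs_sqnorm, row_tail. apply Series_ext. intros j.
  rewrite norm2_pow2 by (apply (bop_l2 (drop_rows N X)); auto using HS_drop_rows with l2).
  unfold sqnorm. rewrite drop_rows_e. apply Series_ext. intros k. unfold tail.
  destruct (k <? N)%nat; auto. rewrite Cmod_0. ring.
Qed.

Lemma hs_sqnorm_le_row_tails W X Y Z N a b : 0 <= a -> 0 <= b -> HS X ->
  (forall j, ex_series (tail (fun k => Cmod (Y (e j) k) ^ 2) N)) ->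
  ex_series (fun j => Series (tail (fun k => Cmod (Y (e j) k) ^ 2) N)) ->
  (forall j, ex_series (tail (fun k => Cmod (Z (e j) k) ^ 2) N)) ->
  ex_series (fun j => Series (tail (fun k => Cmod (Z (e j) k) ^ 2) N)) ->
  (forall j k, Cmod (W (e j) k) ^ 2 <= Cmod (X (e j) k) ^ 2
     + a * tail (fun k => Cmod (Y (e j) k) ^ 2) N k + b * tail (fun k => Cmod (Z (e j) k) ^ 2) N k) ->
  hs_sqnorm W <= hs_sqnorm X + a * row_tail Y N + b * row_tail Z N.
Proof.
  intros Ha Hb HX HY1 HY2 HZ1 HZ2 Hpt. destruct (HS_columns X HX) as [HX1 HX2].
  set (y := fun j => tail (fun k => Cmod (Y (e j) k) ^ 2) N).
  set (z := fun j => tail (fun k => Cmod (Z (e j) k) ^ 2) N).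
  set (x := fun j k => Cmod (X (e j) k) ^ 2).
  assert (Hx : forall j, ex_series (x j)) by exact HX1.
  assert (Hy : forall j, ex_series (y j)) by exact HY1.
  assert (Hz : forall j, ex_series (z j)) by exact HZ1.
  assert (Hrow : forall j, ex_series (fun k => x j k + a * y j k + b * z j k))
    by (intros j; apply ex_series_Rplus; [apply ex_series_Rplus|]; apply ex_series_Rscal || idtac; auto).
  assert (Hrow_sum : forall j, Series (fun k => x j k + a * y j k + b * z j k) =
                               Series (x j) + a * Series (y j) + b * Series (z j)).
  { intros j. rewrite !Series_plus, !Series_scal_l; auto using ex_series_Rscal.
    apply ex_series_Rplus; auto using ex_series_Rscal. }
  assert (HWj : forall j, norm2 (W (e j)) ^ 2 <= Series (x j) + a * Series (y j) + b * Series (z j)).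
  { intros j. assert (Hl : l2 (W (e j))).
    { apply ex_series_nonneg_le with (2 := Hrow j). intros k; split; [apply pow2_ge_0 | apply Hpt]. }
    rewrite norm2_pow2, <- Hrow_sum by auto. apply Series_le; auto.
    intros k; split; [apply pow2_ge_0 | apply Hpt]. }
  assert (Hsum : ex_series (fun j => Series (x j) + a * Series (y j) + b * Series (z j)))
    by (apply ex_series_Rplus; [apply ex_series_Rplus|]; apply ex_series_Rscal || idtac; auto).
  unfold hs_sqnorm at 1. eapply Rle_trans.
  - apply Series_le with (2 := Hsum). intros j; split; [apply pow2_ge_0 | apply HWj].
  - rewrite !Series_plus, !Series_scal_l; auto using ex_series_Rscal.
    + right. unfold hs_sqnorm. f_equal. f_equal. apply Series_ext. intros j.
      symmetry. apply norm2_pow2. auto with l2.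
    + apply ex_series_Rplus; auto using ex_series_Rscal.
Qed.

Section KernelComposition.
Variable A : opS.
Hypothesis hB : bounded_opS A.
Variable M : R.
Hypothesis HM : forall X, HS X -> hs_sqnorm (A X) <= M ^ 2 * hs_sqnorm X.

(* Row [k] of [eta] moved to row [m] is [eps m k o eta], and [A] of it has row [n] equal to
   row [k] of [eta o kernel_op A n m]. *)
Lemma row_comp_kernel_le eta n m k : HS eta ->
  ex_series (fun j => Cmod (eta (kernel_op A n m (e j)) k) ^ 2) /\
  Series (fun j => Cmod (eta (kernel_op A n m (e j)) k) ^ 2) <=
  M ^ 2 * Series (fun j => Cmod (eta (e j) k) ^ 2).
Proof.
  intros He. set (eta' := ocomp (eps m k) eta).
  assert (He' : HS eta') by (unfold eta'; auto with l2).
  assert (Hfix : ocomp (eps m m) eta' = eta').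
  { apply functional_extensionality; intros g. unfold eta', ocomp. rewrite !eps_vsingle.
    cbv beta. rewrite vsingle_eval, Nat.eqb_refl. reflexivity. }
  assert (Hk : forall j, eta (kernel_op A n m (e j)) k = A eta' (e j) n).
  { intros j. rewrite <- Hfix, A_eps_comp by auto with l2.
    unfold eta', ocomp. rewrite eps_vsingle. cbv beta. rewrite vsingle_eval, Nat.eqb_refl. reflexivity. }
  assert (Hh : hs_sqnorm eta' = Series (fun j => Cmod (eta (e j) k) ^ 2)).
  { unfold hs_sqnorm. apply Series_ext. intros j.
    unfold eta', ocomp. rewrite eps_vsingle. cbv beta. rewrite norm2_vsingle. reflexivity. }
  destruct (HS_row_sqnorm (A eta') n (A_HS A hB _ He')) as [H1 H2].
  rewrite (Series_ext _ (fun j => Cmod (A eta' (e j) n) ^ 2)) by (intros; rewrite Hk; auto).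
  split.
  - eapply ex_series_Rext; [|apply H1]. intros j. rewrite Hk. reflexivity.
  - rewrite <- Hh. eapply Rle_trans; [apply H2 | apply HM; auto].
Qed.

Lemma row_tail_comp_kernel_le eta n m N : HS eta ->
  let Z := ocomp eta (kernel_op A n m) in
  (forall j, ex_series (tail (fun k => Cmod (Z (e j) k) ^ 2) N)) /\
  ex_series (fun j => Series (tail (fun k => Cmod (Z (e j) k) ^ 2) N)) /\
  row_tail Z N <= M ^ 2 * row_tail eta N.
Proof.
  intros He Z. unfold row_tail, Z, ocomp.
  set (y := fun j => tail (fun k => Cmod (eta (e j) k) ^ 2) N).
  set (z := fun j => tail (fun k => Cmod (eta (kernel_op A n m (e j)) k) ^ 2) N).
  assert (Hy0 : forall j k, 0 <= y j k) by (intros; apply tail_bounds; intros; apply pow2_ge_0).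
  assert (Hz0 : forall j k, 0 <= z j k) by (intros; apply tail_bounds; intros; apply pow2_ge_0).
  destruct (row_tail_lim eta He) as [Hy _].
  assert (Hyr : forall j, ex_series (y j)) by (intros j; apply ex_series_tail, (HS_columns eta He)).
  destruct (Series_swap_le y Hy0 Hyr (Hy N)) as (_ & Sy2 & Sy3).
  assert (Hcol : forall k, ex_series (fun j => z j k) /\
                           Series (fun j => z j k) <= M ^ 2 * Series (fun j => y j k)).
  { intros k. unfold y, z, tail. destruct (k <? N)%nat.
    - destruct (Series_finite_support (fun _ : nat => 0) 0) as [Z1 Z2]; auto.
      rewrite Z2. simpl. split; [auto | lra].
    - apply row_comp_kernel_le; auto. }
  assert (Hc2 : ex_series (fun k => Series (fun j => z j k))).
  { apply ex_series_nonneg_le with (fun k => M ^ 2 * Series (fun j => y j k));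
      [|apply ex_series_Rscal; auto].
    intros k. split; [apply Series_nonneg; [auto | apply Hcol] | apply Hcol]. }
  destruct (Series_swap_le (fun k j => z j k) (fun k j => Hz0 j k) (fun k => proj1 (Hcol k)) Hc2)
    as (Sz1 & Sz2 & Sz3).
  split; [|split]; auto.
  eapply Rle_trans; [apply Sz3|]. rewrite <- Series_scal_l.
  eapply Rle_trans.
  - apply Series_le with (b := fun k => M ^ 2 * Series (fun j => y j k)); [|apply ex_series_Rscal; auto].
    intros k. split; [apply Series_nonneg; [auto | apply Hcol] | apply Hcol].
  - rewrite !Series_scal_l. apply Rmult_le_compat_l; [apply pow2_ge_0 | auto].
Qed.

End KernelComposition.

Lemma Cmod_sub_scal_pow2 a b d :
  Cmod (Cminus a (Cmult (RtoC d) b)) ^ 2 <= 2 * Cmod a ^ 2 + 2 * (d ^ 2 * Cmod b ^ 2).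
Proof.
  unfold Cminus. eapply Rle_trans; [apply Cmod_plus_pow2|].
  rewrite Cmod_opp, Cmod_mult, Cmod_R, Rpow_mult_distr, pow2_abs. lra.
Qed.

Section RemainderLimit.
Variable A : opS.
Hypothesis hB : bounded_opS A.
Variable d : R.
Variable eta : op.
Hypothesis He : HS eta.

Lemma hs_sqnorm_remainder_le M N : (1 <= N)%nat ->
  (forall X, HS X -> hs_sqnorm (A X) <= M ^ 2 * hs_sqnorm X) ->
  hs_sqnorm (remainder A d eta N) <=
  M ^ 2 * row_tail eta N + 2 * row_tail (A eta) N + 2 * d ^ 2 * (M ^ 2 * row_tail eta N).
Proof.
  intros HN HM.
  set (Z := ocomp eta (kernel_op A 0 0)).
  destruct (row_tail_comp_kernel_le A hB M HM eta 0 0 N He) as (HZ1 & HZ2 & HZ3).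
  fold Z in HZ1, HZ2, HZ3.
  destruct (row_tail_lim (A eta) (A_HS A hB eta He)) as [HY2 _].
  assert (HY1 : forall j, ex_series (tail (fun k => Cmod (A eta (e j) k) ^ 2) N))
    by (intros j; apply ex_series_tail, (HS_columns (A eta) (A_HS A hB eta He))).
  eapply Rle_trans.
  - apply (hs_sqnorm_le_row_tails _ (A (drop_rows N eta)) (A eta) Z N 2 (2 * d ^ 2));
      auto using A_HS, HS_drop_rows; [lra | nra|].
    intros j k. rewrite remainder_eval by auto with l2. unfold tail, Z, ocomp.
    destruct (k <? N)%nat; [nra|].
    pose proof (pow2_ge_0 (Cmod (A (drop_rows N eta) (e j) k))).
    pose proof (Cmod_sub_scal_pow2 (A eta (e j) k) (eta (kernel_op A 0 0 (e j)) k) d). lra.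
  - pose proof (row_tail_nonneg (A eta) N (A_HS A hB eta He)).
    assert (hs_sqnorm (A (drop_rows N eta)) <= M ^ 2 * row_tail eta N)
      by (rewrite <- hs_sqnorm_drop_rows by auto; apply HM, HS_drop_rows; auto).
    assert (2 * d ^ 2 * row_tail Z N <= 2 * d ^ 2 * (M ^ 2 * row_tail eta N))
      by (apply Rmult_le_compat_l; [nra | auto]).
    lra.
Qed.

Lemma remainder_lim : is_lim_seq (fun N => norm_HS (remainder A d eta N)) 0.
Proof.
  destruct (A_hs_sqnorm_bound A hB) as (M & HM).
  assert (HAe : HS (A eta)) by (apply A_HS; auto).
  destruct (row_tail_lim eta He) as [_ Heta], (row_tail_lim (A eta) HAe) as [_ HAeta].
  set (h := fun N =>
    M ^ 2 * row_tail eta N + 2 * row_tail (A eta) N + 2 * d ^ 2 * (M ^ 2 * row_tail eta N)).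
  assert (Hh0 : forall N, 0 <= h N).
  { intros N. unfold h.
    pose proof (row_tail_nonneg eta N He). pose proof (row_tail_nonneg (A eta) N HAe).
    pose proof (pow2_ge_0 M). pose proof (pow2_ge_0 d).
    assert (0 <= M ^ 2 * row_tail eta N) by (apply Rmult_le_pos; auto). nra. }
  apply is_lim_seq_squeeze0 with (fun N => sqrt (h N)) 1%nat.
  - intros N HN. split; [apply norm_HS_nonneg|]. apply sqrt_le_1_alt, hs_sqnorm_remainder_le; auto.
  - apply is_lim_seq_sqrt0; auto.
    replace 0 with (M ^ 2 * 0 + 2 * 0 + 2 * d ^ 2 * (M ^ 2 * 0)) by ring.
    unfold h. repeat apply is_lim_seq_plus'.
    + apply (is_lim_seq_scal_l _ (M ^ 2) 0); auto.
    + apply (is_lim_seq_scal_l _ 2 0); auto.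
    + apply (is_lim_seq_scal_l _ (2 * d ^ 2) (M ^ 2 * 0)), (is_lim_seq_scal_l _ (M ^ 2) 0); auto.
Qed.

End RemainderLimit.

Lemma posdef_kernel_op_diag A m : posdefS A -> posdef (kernel_op A m m).
Proof.
  intros hA. destruct (kernel_op_diag_coercive A hA) as (c & Hc & Hpos).
  split; [apply bop_kernel_op, hA|]. exists c. split; auto. intros x Hx Hn.
  split; [apply kernel_op_diag_real; auto|].
  specialize (Hpos m x Hx). rewrite <- norm2_pow2, Hn in Hpos by auto. lra.
Qed.

(* Subtracting a small multiple of [T 0 0] keeps the diagonal coercive: take [d <= c / (2 |T 0 0|)]. *)
Lemma posdef_kernel_op_diag_shift A : posdefS A ->
  exists d, 0 < d <= 1 / 2 /\
    forall n, posdef (oadd (kernel_op A n n) (oscal (RtoC (- d)) (kernel_op A 0 0))).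
Proof.
  intros hA. pose proof (proj1 hA) as hB.
  destruct (kernel_op_diag_coercive A hA) as (c & Hc & Hpos).
  destruct (bop_norm_bound _ (bop_kernel_op A hB 0 0)) as (M0 & HM0 & HM).
  set (d := Rmin (1 / 2) (c / (2 * (M0 + 1)))).
  assert (Hd : 0 < d <= 1 / 2)
    by (split; [apply Rmin_glb_lt; [lra | apply Rdiv_lt_0_compat; lra] | apply Rmin_l]).
  assert (HdM : d * M0 <= c / 2).
  { assert (d * (2 * (M0 + 1)) <= c).
    { apply Rle_trans with (c / (2 * (M0 + 1)) * (2 * (M0 + 1))).
      - apply Rmult_le_compat_r; [lra | apply Rmin_r].
      - right. field. lra. }
    nra. }
  exists d. split; auto. intros n.
  split; [auto using bop_kernel_op with l2|]. exists (c / 2). split; [lra|].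
  intros x Hx Hn. unfold oadd, oscal.
  rewrite inner_vadd_r, inner_vscal_r by auto using bop_kernel_op with l2.
  pose proof (kernel_op_diag_real A hA n x Hx) as I1.
  pose proof (kernel_op_diag_real A hA 0 x Hx) as I0.
  pose proof (Hpos n x Hx) as P1. rewrite <- norm2_pow2, Hn in P1 by auto.
  assert (B0 : Re (inner x (kernel_op A 0 0 x)) <= M0).
  { eapply Rle_trans; [apply Rle_abs|]. eapply Rle_trans; [apply re_le_Cmod|].
    eapply Rle_trans; [apply Cmod_inner_le; auto using bop_kernel_op with l2|].
    specialize (HM x Hx). rewrite Hn in *. lra. }
  destruct (inner x (kernel_op A n n x)) as [r1 i1], (inner x (kernel_op A 0 0 x)) as [r0 i0].
  unfold Cplus, Cmult, RtoC, Re, Im in *. simpl in *.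
  assert (d * r0 <= d * M0) by (apply Rmult_le_compat_l; lra).
  split; [rewrite I1, I0; ring | nra].
Qed.

Theorem lemma3p15 (A : opS) (hA : posdefS A) :
  exists (b11 : op) (a : nat -> nat -> op),
    selfadjoint b11 /\ (forall n m, selfadjoint (a n m)) /\
    posdef b11 /\ posdef (a 0%nat 0%nat) /\ posdef (a 1%nat 1%nat) /\
    forall eta : op, HS eta ->
      is_lim_seq
        (fun N => norm_HS
           (osub (A eta)
                 (oadd (ocomp b11 (ocomp eta (a 0%nat 0%nat))) (partial_sum a eta N))))
        0.
Proof.
  pose proof (proj1 hA) as hB.
  destruct (posdef_kernel_op_diag_shift A hA) as (d & Hd & Hshift).
  exists (b11_op d), (coef_op (kernel_op A) d).
  split; [apply selfadjoint_b11_op|].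
  split; [intros n m; apply selfadjoint_coef_op; auto using bop_kernel_op, kernel_op_adjoint|].
  split; [apply posdef_b11_op; lra|].
  split; [apply posdef_kernel_op_diag; auto|].
  split; [apply (Hshift 1%nat)|].
  intros eta He. apply (remainder_lim A hB d eta He).
Qed.
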